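(* Let $p \geq 5$ and let $L$ be the Laplacian of the graph $K_p \oplus C_\infty$, regarded as a bounded operator on $l^2_c$. Then there exists $\lambda^* \in (p,p+2)$ such that the spectrum of $L$ is the union of the disjoint sets $[0,4]$ and $\{\lambda^*, p\}$, where $[0,4]$ is the essential spectrum of $L$ and $\{\lambda^*, p\}$ is the point spectrum of $L$.
   Context: The graph $K_p \oplus C_\infty$ has vertex set $\{-p+1,\ldots,0\} \cup \{1,2,3,\ldots\}$, with edges between every pair of distinct vertices in $\{-p+1,\ldots,0\}$, the edge $\{0,1\}$, and the edges $\{j,j+1\}$ for all $j \geq 1$. $l^2_c$ is the complex Hilbert space of square-summable complex functions on the vertex set. The Laplacian acts by $(Lv)_i = \deg(i)\, v_i - \sum_{j \sim i} v_j$. The spectrum $\sigma(L)$ is the set of $\lambda \in \mathbb{C}$ for which $L-\lambda I$ has no bounded inverse on $l^2_c$; the point spectrum is the set of $\lambda$ with $Lv = \lambda v$ for some nonzero $v \in l^2_c$; the essential spectrum is the set of $\lambda \in \sigma(L)$ such that $L - \lambda I$ either is not Fredholm, or is Fredholm with nonzero index. *)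

From Stdlib Require Import Reals ZArith List.
From Coquelicot Require Import Coquelicot.
Open Scope R_scope.

(** Vertices of K_p (+) C_oo are the integers -p+1, -p+2, ..., 0, 1, 2, ...
    We index them by nat: index i <-> vertex (i - (p-1)). *)
Definition vert (p i : nat) : Z := (Z.of_nat i - (Z.of_nat p - 1))%Z.

(** Adjacency of K_p (+) C_oo, in terms of the integer labels a = vert p i,
    b = vert p j: a <> b and either both a,b <= 0 (clique on {-p+1,...,0}),
    or |a-b| = 1 with min(a,b) >= 0 (edge {0,1} and edges {j,j+1}, j >= 1). *)
Definition adjb (p i j : nat) : bool :=
  if Z.eq_dec (vert p i) (vert p j) then
    false
  else
    orb (andb (Z.leb (vert p i) 0) (Z.leb (vert p j) 0))
        (Z.eqb (Z.abs (vert p i - vert p j)) 1 &&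
         Z.leb 0 (Z.min (vert p i) (vert p j)))%bool.

(** All neighbours of index i have index < nb_bound p i. *)
Definition nb_bound (p i : nat) : nat := (p + i + 2)%nat.

Definition Csum (l : list C) : C := fold_right Cplus (RtoC 0) l.

Definition deg (p i : nat) : R :=
  INR (length (filter (adjb p i) (seq 0 (nb_bound p i)))).

Definition Lap (p : nat) (v : nat -> C) : nat -> C :=
  fun i => Cminus (Cmult (RtoC (deg p i)) (v i))
                  (Csum (map v (filter (adjb p i) (seq 0 (nb_bound p i))))).

Definition l2 (v : nat -> C) : Prop := ex_series (fun n => (Cmod (v n)) ^ 2).
Definition l2norm (v : nat -> C) : R := sqrt (Series (fun n => (Cmod (v n)) ^ 2)).

Definition vzero : nat -> C := fun _ => RtoC 0.
Definition vadd (u v : nat -> C) : nat -> C := fun i => Cplus (u i) (v i).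
Definition vsub (u v : nat -> C) : nat -> C := fun i => Cminus (u i) (v i).
Definition vscale (a : C) (v : nat -> C) : nat -> C := fun i => Cmult a (v i).

Definition Op := (nat -> C) -> (nat -> C).

Definition bounded_op (T : Op) : Prop :=
  (forall v, l2 v -> l2 (T v)) /\
  (forall a u v, l2 u -> l2 v -> T (vadd (vscale a u) v) = vadd (vscale a (T u)) (T v)) /\
  (exists M : R, forall v, l2 v -> l2norm (T v) <= M * l2norm v).

Definition shift_op (A : Op) (lam : C) : Op := fun v => vsub (A v) (vscale lam v).

Definition has_bounded_inverse (A : Op) : Prop :=
  exists B : Op, bounded_op B /\
    (forall v, l2 v -> B (A v) = v) /\ (forall v, l2 v -> A (B v) = v).

Definition spectrum (A : Op) (lam : C) : Prop :=
  ~ has_bounded_inverse (shift_op A lam).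

Definition point_spectrum (A : Op) (lam : C) : Prop :=
  exists v, l2 v /\ v <> vzero /\ A v = vscale lam v.

Fixpoint lincomb (cs : list C) (ws : list (nat -> C)) : nat -> C :=
  match cs, ws with
  | c :: cs', w :: ws' => vadd (vscale c w) (lincomb cs' ws')
  | _, _ => vzero
  end.

Definition in_range (A : Op) (x : nat -> C) : Prop := exists v, l2 v /\ x = A v.

Definition closed_range (A : Op) : Prop :=
  forall (u : nat -> nat -> C) (w : nat -> C),
    (forall k, in_range A (u k)) -> l2 w ->
    is_lim_seq (fun k => l2norm (vsub (u k) w)) 0 ->
    in_range A w.

Definition dim_ker (A : Op) (m : nat) : Prop :=
  exists ws : list (nat -> C), length ws = m /\
    List.Forall (fun w => l2 w /\ A w = vzero) ws /\
    (forall cs, length cs = m -> lincomb cs ws = vzero -> List.Forall (fun c => c = RtoC 0) cs) /\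
    (forall v, l2 v -> A v = vzero -> exists cs, length cs = m /\ v = lincomb cs ws).

Definition codim_range (A : Op) (n : nat) : Prop :=
  exists ws : list (nat -> C), length ws = n /\
    List.Forall l2 ws /\
    (forall cs, length cs = n -> in_range A (lincomb cs ws) -> List.Forall (fun c => c = RtoC 0) cs) /\
    (forall x, l2 x -> exists v cs, l2 v /\ length cs = n /\ x = vadd (A v) (lincomb cs ws)).

Definition fredholm (A : Op) : Prop :=
  closed_range A /\ (exists m, dim_ker A m) /\ (exists n, codim_range A n).

Definition fredholm_index (A : Op) (k : Z) : Prop :=
  fredholm A /\ exists m n, dim_ker A m /\ codim_range A n /\ k = (Z.of_nat m - Z.of_nat n)%Z.

Definition essential_spectrum (A : Op) (lam : C) : Prop :=
  spectrum A lam /\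
  (~ fredholm (shift_op A lam) \/
   (fredholm (shift_op A lam) /\ exists k, fredholm_index (shift_op A lam) k /\ k <> 0%Z)).

From Stdlib Require Import Reals ZArith List Lia Psatz Lra FunctionalExtensionality Classical.
From Coquelicot Require Import Coquelicot.
Open Scope R_scope.

(* On the path, [(L - z) x = 0] is the recurrence [x_(k+1) + x_(k-1) = (2 - z) x_k].  Writing
   [2 - z = r + 1/r] with [|r| <= 1], its solutions tending to 0 are the multiples of [r^k], and
   only for [|r| < 1], i.e. for [z] off [0, 4].  For such [z] the resolvent is explicit: the path
   part is inverted by geometric summation, and the [p] equations on the clique reduce to one
   scalar equation, solvable unless [z = p] or the secular function
   [(1 - z)(p + 1 - z - r) - (p - z)] vanishes.  With [|r| < 1] the latter happens only at the
   root [r_minus] in (-1, 0) of [(p - 2) r^2 - (p - 2) r - 1], i.e. at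
   [lam_star = p - (p - 1) r_minus], which lies in (p, p + 2).  At [p] (eigenvectors [e_i - e_j]
   on the clique) and at [lam_star] (a one-dimensional eigenspace not meeting the range) the
   operator [L - z] has closed range and kernel dimension equal to range codimension, hence
   index 0.  For [z] in [0, 4] the Weyl sequence [r^k / sqrt k] shows that the range of [L - z]
   is not closed. *)

Fixpoint psum (a : nat -> R) (n : nat) : R :=
  match n with O => 0 | S m => psum a m + a m end.

Lemma psum_sum_n (a : nat -> R) n : sum_n a n = psum a (S n).
Proof.
  induction n.
  - simpl. rewrite sum_O. lra.
  - rewrite sum_Sn, IHn. simpl. unfold plus; simpl. lra.
Qed.

Lemma psum_nonneg a n : (forall k, 0 <= a k) -> 0 <= psum a n.
Proof. intros H; induction n; simpl; [lra| specialize (H n); lra]. Qed.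

Lemma psum_mono a m n : (forall k, 0 <= a k) -> (m <= n)%nat -> psum a m <= psum a n.
Proof.
  intros H Hmn; induction Hmn; [lra|]. simpl. specialize (H m0). lra.
Qed.

Lemma psum_ext a b n : (forall k, (k < n)%nat -> a k = b k) -> psum a n = psum b n.
Proof.
  induction n; intros H; simpl; auto.
  rewrite IHn by (intros; apply H; lia). rewrite H by lia. auto.
Qed.

Lemma psum_le a b n : (forall k, (k < n)%nat -> a k <= b k) -> psum a n <= psum b n.
Proof.
  induction n; intros H; simpl; [lra|].
  assert (psum a n <= psum b n) by (apply IHn; intros; apply H; lia).
  specialize (H n ltac:(lia)). lra.
Qed.

Lemma psum_plus a b n : psum (fun k => a k + b k) n = psum a n + psum b n.
Proof. induction n; simpl; lra. Qed.

Lemma psum_scal c a n : psum (fun k => c * a k) n = c * psum a n.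
Proof. induction n; simpl; [lra|]. rewrite IHn. lra. Qed.

Lemma psum_const (K : R) N : psum (fun _ => K) N = INR N * K.
Proof. induction N; simpl psum. simpl; lra. rewrite IHN, S_INR. lra. Qed.

Lemma psum_zero N : psum (fun _ => 0) N = 0.
Proof. rewrite psum_const. ring. Qed.

Lemma psum_shift a n : psum a (S n) = a O + psum (fun k => a (S k)) n.
Proof. induction n; simpl in *; lra. Qed.

Lemma psum_add a m n : psum a (m + n) = psum a m + psum (fun k => a (m + k)%nat) n.
Proof.
  induction n; simpl. rewrite Nat.add_0_r; lra.
  rewrite Nat.add_succ_r. simpl. rewrite IHn. lra.
Qed.

Lemma psum_pred_le (a : nat -> R) N : (forall k, 0 <= a k) ->
  psum (fun i => a (i - 1)%nat) N <= a O + psum a N.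
Proof.
  intros Hpos. destruct N. simpl. specialize (Hpos O). lra.
  rewrite psum_shift. simpl (0 - 1)%nat.
  rewrite (psum_ext (fun k => a (S k - 1)%nat) a) by (intros; f_equal; lia).
  pose proof (psum_mono a N (S N) Hpos ltac:(lia)). lra.
Qed.

Lemma psum_succ_le (a : nat -> R) N : (forall k, 0 <= a k) ->
  psum (fun i => a (S i)) N <= psum a (S N).
Proof. intros Hpos. rewrite psum_shift. specialize (Hpos O). lra. Qed.

Lemma psum_indicator_le (K : R) m N : 0 <= K ->
  psum (fun i => if Nat.ltb i m then K else 0) N <= INR m * K.
Proof.
  intros HK.
  assert (Hle : forall N, (N <= m)%nat -> psum (fun i => if Nat.ltb i m then K else 0) N <= INR m * K).
  { intros N0 HN. eapply Rle_trans. apply psum_le with (b := fun _ => K).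
    intros k _. destruct (Nat.ltb k m); lra. rewrite psum_const.
    apply Rmult_le_compat_r; auto. apply le_INR; auto. }
  destruct (Nat.le_gt_cases N m). apply Hle; auto.
  replace N with (m + (N - m))%nat by lia. rewrite psum_add.
  rewrite (psum_ext (fun k => if Nat.ltb (m + k) m then K else 0) (fun _ => 0)), psum_zero.
  pose proof (Hle m (le_n m)). lra.
  intros k _. destruct (Nat.ltb_spec (m + k) m). lia. ring.
Qed.

Lemma psum_restrict_le (x : nat -> R) q N : (forall k, 0 <= x k) ->
  psum (fun i => if Nat.ltb i q then x i else 0) N <= psum x q.
Proof.
  intros Hx. induction N; simpl psum.
  - apply psum_nonneg; auto.
  - destruct (Nat.ltb_spec N q).
    + assert (psum (fun i => if Nat.ltb i q then x i else 0) N + x N <= psum x (S N)).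
      { simpl. apply Rplus_le_compat_r. apply psum_le. intros k Hk. destruct (Nat.ltb_spec k q); [lra|lia]. }
      pose proof (psum_mono x (S N) q Hx ltac:(lia)). lra.
    + lra.
Qed.

Lemma psum_shift_right (x : nat -> R) q N :
  psum (fun i => if Nat.ltb i q then 0 else x (i - q)%nat) N = psum x (N - q).
Proof.
  induction N. reflexivity.
  change (psum (fun i => if Nat.ltb i q then 0 else x (i - q)%nat) (S N)) with
    (psum (fun i => if Nat.ltb i q then 0 else x (i - q)%nat) N + (if Nat.ltb N q then 0 else x (N - q)%nat)).
  rewrite IHN. destruct (Nat.ltb_spec N q).
  - replace (S N - q)%nat with O by lia. replace (N - q)%nat with O by lia. simpl. lra.
  - replace (S N - q)%nat with (S (N - q)) by lia. simpl. reflexivity.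
Qed.

Lemma psum_delta_le (c : R) a N : 0 <= c -> psum (fun i => if Nat.eqb i a then c else 0) N <= c.
Proof.
  intros Hc. induction N; simpl psum. lra.
  destruct (Nat.eqb_spec N a).
  - subst. assert (psum (fun i => if Nat.eqb i a then c else 0) a = 0).
    { rewrite (psum_ext _ (fun _ => 0)), psum_zero; auto. intros k Hk. destruct (Nat.eqb_spec k a); [lia|ring]. }
    lra.
  - lra.
Qed.

Lemma psum_geom_le (t : R) N : 0 <= t < 1 -> psum (fun k => t ^ k) N <= / (1 - t).
Proof.
  intros Ht. assert (E : (1 - t) * psum (fun k => t ^ k) N = 1 - t ^ N).
  { induction N; simpl psum. simpl; ring. rewrite Rmult_plus_distr_l, IHN. simpl. ring. }
  assert (0 <= t ^ N) by (apply pow_le; lra).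
  apply Rmult_le_reg_l with (1 - t). lra. rewrite E, Rinv_r by lra. lra.
Qed.

Lemma psum_forward_rec_le (x b : nat -> R) (s B : R) : 0 <= s < 1 ->
  (forall k, 0 <= x k) -> x O = 0 -> (forall k, x (S k) <= s * x k + b k) ->
  (forall M, psum b M <= B) -> forall N, psum x N <= B / (1 - s).
Proof.
  intros Hs Hx H0 Hrec HB N.
  assert (Hsucc : forall M, psum x (S M) <= B / (1 - s)).
  { intros M. rewrite psum_shift, H0, Rplus_0_l.
    assert (Hle : psum (fun k => x (S k)) M <= s * psum x M + psum b M).
    { rewrite <- psum_scal, <- psum_plus. apply psum_le. intros k _. apply Hrec. }
    assert (Hmono : psum x M <= psum (fun k => x (S k)) M).
    { pose proof (psum_mono x M (S M) Hx ltac:(lia)). rewrite psum_shift, H0 in H. lra. }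
    pose proof (HB M).
    apply Rmult_le_reg_l with (1 - s). lra. unfold Rdiv. rewrite <- Rmult_assoc.
    rewrite Rinv_r_simpl_m by lra. nra. }
  destruct N; [|apply Hsucc]. simpl.
  pose proof (Hsucc O). simpl in H. pose proof (Hx O). lra.
Qed.

Lemma psum_bounded_Series (a : nat -> R) (M : R) :
  (forall n, 0 <= a n) -> (forall N, psum a N <= M) ->
  ex_series a /\ Series a <= M.
Proof.
  intros Hpos HM.
  assert (Hf : ex_finite_lim_seq (sum_n a)).
  { apply ex_finite_lim_seq_incr with M.
    - intros n. rewrite !psum_sum_n. simpl. specialize (Hpos (S n)). simpl in *. lra.
    - intros n. rewrite psum_sum_n. apply HM. }
  destruct Hf as [l Hl].
  split; [exists l; exact Hl|].
  replace (Series a) with l by (unfold Series; rewrite (is_lim_seq_unique _ _ Hl); reflexivity).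
  assert (Hle : Rbar_le l M).
  { apply is_lim_seq_le with (sum_n a) (fun _ => M); auto.
    - intros n. rewrite psum_sum_n. apply HM.
    - apply is_lim_seq_const. }
  exact Hle.
Qed.

Lemma psum_le_Series a n : (forall k, 0 <= a k) -> ex_series a -> psum a n <= Series a.
Proof.
  intros Hpos [l Hl].
  rewrite (is_series_unique _ _ Hl).
  assert (Hle : Rbar_le (psum a n) l).
  { apply is_lim_seq_le_loc with (fun _ => psum a n) (sum_n a); auto.
    - exists n. intros m Hm. rewrite psum_sum_n. apply psum_mono; auto.
    - apply is_lim_seq_const. }
  exact Hle.
Qed.

Lemma Series_nonneg a : (forall k, 0 <= a k) -> ex_series a -> 0 <= Series a.
Proof. intros. pose proof (psum_le_Series a 0 H H0). simpl in H1. lra. Qed.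

Lemma term_le_Series a n : (forall k, 0 <= a k) -> ex_series a -> a n <= Series a.
Proof.
  intros. pose proof (psum_le_Series a (S n) H H0). simpl in H1.
  pose proof (psum_nonneg a n H). lra.
Qed.

Lemma is_lim_seq_psum a : ex_series a -> is_lim_seq (psum a) (Series a).
Proof.
  intros Hex. pose proof (Series_correct _ Hex) as H.
  apply is_lim_seq_incr_1.
  apply is_lim_seq_ext with (sum_n a). intros n. rewrite psum_sum_n. reflexivity.
  exact H.
Qed.

Lemma psum_tail_le (a : nat -> R) m N : (forall k, 0 <= a k) -> ex_series a ->
  psum (fun i => if Nat.leb m i then a i else 0) N <= Series a - psum a m.
Proof.
  intros Hpos Hex.
  destruct (Nat.le_gt_cases N m).
  - rewrite (psum_ext _ (fun _ => 0)), psum_zero.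
    pose proof (psum_le_Series a m Hpos Hex). lra.
    intros k Hk. destruct (Nat.leb_spec m k); [lia|ring].
  - replace N with (m + (N - m))%nat by lia. rewrite psum_add.
    rewrite (psum_ext (fun i => if Nat.leb m i then a i else 0) (fun _ => 0)), psum_zero
      by (intros k Hk; destruct (Nat.leb_spec m k); [lia|ring]).
    rewrite (psum_ext (fun k => if Nat.leb m (m + k) then a (m + k)%nat else 0) (fun k => a (m + k)%nat))
      by (intros k _; destruct (Nat.leb_spec m (m+k)); [auto|lia]).
    pose proof (psum_le_Series a (m + (N - m)) Hpos Hex). rewrite psum_add in H0. lra.
Qed.

Lemma pow2_le_compat (x y : R) : 0 <= x -> x <= y -> x ^ 2 <= y ^ 2.
Proof. intros; apply pow_incr; lra. Qed.

Lemma sum3_sq_le (a b c : R) : (a + b + c) ^ 2 <= 3 * (a^2 + b^2 + c^2).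
Proof.
  assert (3 * (a^2 + b^2 + c^2) - (a + b + c) ^ 2 = (a-b)^2 + (b-c)^2 + (a-c)^2) by ring.
  pose proof (pow2_ge_0 (a-b)). pose proof (pow2_ge_0 (b-c)). pose proof (pow2_ge_0 (a-c)). lra.
Qed.

Lemma sq_convex_le (s a b : R) : 0 <= s < 1 -> (s * a + b) ^ 2 <= s * a ^ 2 + b ^ 2 / (1 - s).
Proof.
  intros Hs.
  assert (s * a ^ 2 + b ^ 2 / (1 - s) - (s * a + b) ^ 2 = s * ((1 - s) * a - b) ^ 2 / (1 - s)) by (field; lra).
  assert (0 <= s * ((1 - s) * a - b) ^ 2 / (1 - s)).
  { apply Rmult_le_pos. apply Rmult_le_pos. lra. apply pow2_ge_0. apply Rlt_le, Rinv_0_lt_compat. lra. }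
  lra.
Qed.

Lemma C_eq_proj (x y : C) : fst x = fst y -> snd x = snd y -> x = y.
Proof. destruct x, y; simpl; intros; subst; auto. Qed.

Lemma Cmod_minus_le (a b : C) : Cmod (Cminus a b) <= Cmod a + Cmod b.
Proof.
  unfold Cminus. eapply Rle_trans; [apply Cmod_triangle|].
  rewrite Cmod_opp. lra.
Qed.

Lemma Cmod_plus_sq_le (a b : C) : Cmod (a + b) ^ 2 <= 2 * Cmod a ^ 2 + 2 * Cmod b ^ 2.
Proof.
  pose proof (Cmod_triangle a b). pose proof (Cmod_ge_0 (a+b)).
  pose proof (Cmod_ge_0 a). pose proof (Cmod_ge_0 b).
  set (x := Cmod (a+b)%C) in *. set (y := Cmod a) in *. set (z := Cmod b) in *.
  assert (x * x <= (y + z) * (y + z)) by (apply Rmult_le_compat; lra).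
  assert (0 <= (y - z) * (y - z)) by apply Rle_0_sqr.
  simpl. lra.
Qed.

Lemma Cmult_eq_0 (a b : C) : Cmult a b = RtoC 0 -> a = RtoC 0 \/ b = RtoC 0.
Proof.
  intros H. assert (Cmod a * Cmod b = 0) by (rewrite <- Cmod_mult, H; apply Cmod_0).
  destruct (Rmult_integral _ _ H0); [left|right]; apply Cmod_eq_0; auto.
Qed.

Lemma Cmult_eq_reg_l (c a b : C) : Cmult c a = Cmult c b -> c <> RtoC 0 -> a = b.
Proof.
  intros H Hc. transitivity (Cmult (Cinv c) (Cmult c a)). field; auto.
  rewrite H. field; auto.
Qed.

Lemma Csqrt_exists (w : C) : exists s : C, Cmult s s = w.
Proof.
  destruct w as [a b].
  set (m := sqrt (a * a + b * b)).
  assert (Hm0 : 0 <= m) by apply sqrt_pos.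
  assert (Hm2 : m * m = a * a + b * b) by (apply sqrt_sqrt; nra).
  assert (Hma : -m <= a <= m) by (split; nra).
  set (x := sqrt ((m + a) / 2)). set (y := sqrt ((m - a) / 2)).
  assert (Hx : x * x = (m + a) / 2) by (apply sqrt_sqrt; lra).
  assert (Hy : y * y = (m - a) / 2) by (apply sqrt_sqrt; lra).
  assert (Hx0 : 0 <= x) by apply sqrt_pos. assert (Hy0 : 0 <= y) by apply sqrt_pos.
  assert (Hxy : x * y = Rabs b / 2).
  { assert (Hb : Rabs b * Rabs b = b * b) by (rewrite <- Rabs_mult, Rabs_pos_eq; nra).
    assert (Hsq : (x * y) * (x * y) = (Rabs b / 2) * (Rabs b / 2)).
    { replace (x * y * (x * y)) with ((x * x) * (y * y)) by ring. rewrite Hx, Hy.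
      replace (Rabs b / 2 * (Rabs b / 2)) with ((Rabs b * Rabs b) / 4) by field. rewrite Hb. nra. }
    apply Rsqr_inj; [nra | pose proof (Rabs_pos b); lra | exact Hsq]. }
  destruct (Rle_lt_dec 0 b).
  - exists (x, y). unfold Cmult; simpl. rewrite Rabs_pos_eq in Hxy by lra.
    f_equal; nra.
  - exists (x, -y). unfold Cmult; simpl. rewrite Rabs_left in Hxy by lra.
    f_equal; nra.
Qed.

Definition sqmod (v : nat -> C) (n : nat) : R := Cmod (v n) ^ 2.
Definition l2sq (v : nat -> C) : R := Series (sqmod v).

Lemma sqmod_nonneg v n : 0 <= sqmod v n.
Proof. unfold sqmod. apply pow2_ge_0. Qed.

Lemma l2sq_nonneg v : l2 v -> 0 <= l2sq v.
Proof. intros H. apply Series_nonneg; auto. apply sqmod_nonneg. Qed.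

Lemma l2norm_sq v : l2 v -> l2norm v ^ 2 = l2sq v.
Proof. intros H. unfold l2norm. rewrite pow2_sqrt; auto. apply l2sq_nonneg; auto. Qed.

Lemma l2norm_nonneg v : 0 <= l2norm v.
Proof. apply sqrt_pos. Qed.

Lemma Cmod_le_l2norm v n : l2 v -> Cmod (v n) <= l2norm v.
Proof.
  intros H. unfold l2norm.
  rewrite <- (sqrt_pow2 (Cmod (v n))) by apply Cmod_ge_0.
  apply sqrt_le_1_alt. apply (term_le_Series (fun n => Cmod (v n) ^ 2)).
  - intros; apply pow2_ge_0.
  - exact H.
Qed.

Lemma l2_of_psum_bound (x : nat -> C) (K : R) :
  (forall N, psum (sqmod x) N <= K) -> l2 x /\ l2sq x <= K.
Proof. intros H. exact (psum_bounded_Series (sqmod x) K (sqmod_nonneg x) H). Qed.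

Lemma psum_le_l2sq v n : l2 v -> psum (sqmod v) n <= l2sq v.
Proof. intros. apply psum_le_Series; auto. apply sqmod_nonneg. Qed.

Lemma sqmod_le_l2sq v n : l2 v -> sqmod v n <= l2sq v.
Proof. intros. apply (term_le_Series (sqmod v)); auto. apply sqmod_nonneg. Qed.

Lemma l2norm_le_of_l2sq (u v : nat -> C) (M : R) :
  0 <= M -> l2sq u <= M ^ 2 * l2sq v -> l2norm u <= M * l2norm v.
Proof.
  intros HM H. unfold l2norm. fold (l2sq u) (l2sq v).
  rewrite <- (sqrt_pow2 M HM) at 1. rewrite <- sqrt_mult_alt by (apply pow2_ge_0).
  apply sqrt_le_1_alt. exact H.
Qed.

Lemma l2_add u v : l2 u -> l2 v -> l2 (vadd u v).
Proof.
  intros Hu Hv. apply (l2_of_psum_bound _ (2 * l2sq u + 2 * l2sq v)). intros N.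
  eapply Rle_trans. apply psum_le with (b := fun k => 2 * sqmod u k + 2 * sqmod v k).
  intros k _. unfold sqmod, vadd. apply Cmod_plus_sq_le.
  rewrite psum_plus, !psum_scal. pose proof (psum_le_l2sq u N Hu). pose proof (psum_le_l2sq v N Hv). lra.
Qed.

Lemma l2_scale a v : l2 v -> l2 (vscale a v).
Proof.
  intros Hv. apply (l2_of_psum_bound _ (Cmod a ^ 2 * l2sq v)). intros N.
  rewrite (psum_ext _ (fun k => Cmod a ^ 2 * sqmod v k)).
  rewrite psum_scal. pose proof (psum_le_l2sq v N Hv). apply Rmult_le_compat_l; auto. apply pow2_ge_0.
  intros k _. unfold sqmod, vscale. rewrite Cmod_mult. ring.
Qed.

Lemma vsub_eq u v : vsub u v = vadd u (vscale (RtoC (-1)) v).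
Proof. apply functional_extensionality. intros i. unfold vsub, vadd, vscale. ring. Qed.

Lemma vsub_self w : vsub w w = vzero.
Proof. apply functional_extensionality. intros i. unfold vsub, vzero. ring. Qed.

Lemma l2_sub u v : l2 u -> l2 v -> l2 (vsub u v).
Proof. intros. rewrite vsub_eq. apply l2_add; auto. apply l2_scale; auto. Qed.

Lemma l2_finite (v : nat -> C) n : (forall i, (n <= i)%nat -> v i = RtoC 0) -> l2 v.
Proof.
  intros H. apply (l2_of_psum_bound _ (psum (sqmod v) n)). intros N.
  destruct (Nat.le_gt_cases N n). apply psum_mono; auto. apply sqmod_nonneg.
  replace N with (n + (N - n))%nat by lia. rewrite psum_add.
  rewrite (psum_ext (fun k => sqmod v (n + k)%nat) (fun _ => 0)), psum_zero. lra.
  intros k _. unfold sqmod. rewrite H by lia. rewrite Cmod_0. ring.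
Qed.

Lemma l2_vzero : l2 vzero.
Proof. apply (l2_finite _ 0). reflexivity. Qed.

Lemma l2_shift q w : l2 w -> l2 (fun m => w (q + m)%nat).
Proof. intros H. exact (proj1 (ex_series_incr_n (fun n => Cmod (w n) ^ 2) q) H). Qed.

Lemma l2sq_shift_le q w : l2 w -> l2sq (fun m => w (q + m)%nat) <= l2sq w.
Proof.
  intros H. apply (l2_of_psum_bound _ (l2sq w)). intros N.
  eapply Rle_trans. 2: apply (psum_le_l2sq w (q + N) H).
  rewrite psum_add. pose proof (psum_nonneg (sqmod w) q (sqmod_nonneg w)). unfold sqmod at 1 3. lra.
Qed.

Lemma l2norm_vsub_sym u w : l2norm (vsub u w) = l2norm (vsub w u).
Proof.
  unfold l2norm. f_equal. apply Series_ext. intros n. unfold vsub.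
  replace (Cminus (u n) (w n)) with (Copp (Cminus (w n) (u n))) by ring. rewrite Cmod_opp. auto.
Qed.

Definition unit_vec (a i : nat) : C := if Nat.eqb i a then RtoC 1 else RtoC 0.

Lemma unit_vec_l2 a : l2 (unit_vec a).
Proof. apply (l2_finite _ (S a)). intros i Hi. unfold unit_vec. destruct (Nat.eqb_spec i a); [lia|auto]. Qed.

Definition truncate (K : nat) (v : nat -> C) : nat -> C := fun i => if Nat.ltb i K then v i else RtoC 0.

Lemma truncate_l2 K v : l2 (truncate K v).
Proof. apply (l2_finite _ K). intros i Hi. unfold truncate. destruct (Nat.ltb_spec i K); [lia|auto]. Qed.

Lemma bounded_of_psum_bound (T : Op) (K : R) : 0 <= K ->
  (forall v, l2 v -> forall N, psum (sqmod (T v)) N <= K * l2sq v) ->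
  (forall v, l2 v -> l2 (T v)) /\ exists M, forall v, l2 v -> l2norm (T v) <= M * l2norm v.
Proof.
  intros HK H. split.
  - intros v Hv. apply (l2_of_psum_bound (T v) (K * l2sq v)). apply H; auto.
  - exists (sqrt K). intros v Hv. apply l2norm_le_of_l2sq. apply sqrt_pos.
    rewrite pow2_sqrt by auto. apply (l2_of_psum_bound (T v) (K * l2sq v)). apply H; auto.
Qed.

Lemma bounded_op_vzero (B : Op) : bounded_op B -> B vzero = vzero.
Proof.
  intros [_ [Hlin _]]. specialize (Hlin (RtoC (-1)) vzero vzero l2_vzero l2_vzero).
  assert (E : vadd (vscale (RtoC (-1)) vzero) vzero = vzero).
  { apply functional_extensionality. intros i. unfold vadd, vscale, vzero. ring. }
  rewrite E in Hlin. apply functional_extensionality. intros i.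
  apply (f_equal (fun f => f i)) in Hlin. unfold vadd, vscale, vzero in *.
  rewrite Hlin. ring.
Qed.

(** * The Laplacian of K_p (+) C_oo *)

Fixpoint csum (f : nat -> C) (n : nat) : C :=
  match n with O => RtoC 0 | S m => Cplus (csum f m) (f m) end.

Lemma csum_S f n : csum f (S n) = Cplus (csum f n) (f n).
Proof. reflexivity. Qed.

Lemma csum_ext f g n : (forall k, (k < n)%nat -> f k = g k) -> csum f n = csum g n.
Proof.
  induction n; intros H; simpl; auto.
  rewrite IHn by (intros; apply H; lia). rewrite H by lia. auto.
Qed.

Lemma csum_plus f g n : csum (fun k => Cplus (f k) (g k)) n = Cplus (csum f n) (csum g n).
Proof. induction n; simpl. - apply C_eq_proj; simpl; lra. - rewrite IHn. ring. Qed.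

Lemma csum_minus f g n : csum (fun k => Cminus (f k) (g k)) n = Cminus (csum f n) (csum g n).
Proof. induction n; simpl. - apply C_eq_proj; simpl; lra. - rewrite IHn. ring. Qed.

Lemma csum_scal c f n : csum (fun k => Cmult c (f k)) n = Cmult c (csum f n).
Proof. induction n; simpl. - apply C_eq_proj; simpl; lra. - rewrite IHn. ring. Qed.

Lemma csum_linear a u v n : csum (vadd (vscale a u) v) n = Cplus (Cmult a (csum u n)) (csum v n).
Proof. unfold vadd, vscale. rewrite csum_plus, csum_scal. reflexivity. Qed.

Lemma csum_const c n : csum (fun _ => c) n = Cmult (RtoC (INR n)) c.
Proof.
  induction n; simpl csum. - apply C_eq_proj; simpl; lra.
  - rewrite IHn. rewrite S_INR. rewrite RtoC_plus. ring.
Qed.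

Lemma csum_zero n : csum (fun _ => RtoC 0) n = RtoC 0.
Proof. rewrite csum_const. ring. Qed.

Lemma csum_shift0 f n : csum f (S n) = Cplus (f O) (csum (fun j => f (S j)) n).
Proof. induction n. simpl. ring. rewrite csum_S, IHn. simpl. ring. Qed.

Lemma csum_delta (F : nat -> C) a n :
  csum (fun k => if Nat.eqb k a then F k else RtoC 0) n = if Nat.ltb a n then F a else RtoC 0.
Proof.
  induction n; simpl csum.
  - destruct (Nat.ltb_spec a 0); [lia|]. apply C_eq_proj; simpl; lra.
  - rewrite IHn. destruct (Nat.eqb_spec n a); destruct (Nat.ltb_spec a n); destruct (Nat.ltb_spec a (S n));
      try lia; subst; ring.
Qed.

Lemma csum_unit_vec (c : nat -> C) n x :
  csum (fun j => Cmult (c j) (unit_vec j x)) n = if Nat.ltb x n then c x else RtoC 0.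
Proof.
  rewrite (csum_ext _ (fun j => if Nat.eqb j x then c j else RtoC 0)).
  apply csum_delta. intros j _. unfold unit_vec.
  destruct (Nat.eqb_spec x j); destruct (Nat.eqb_spec j x); subst; try lia; ring.
Qed.

Lemma csum_restrict (F : nat -> C) m n : (m <= n)%nat ->
  csum (fun k => if Nat.ltb k m then F k else RtoC 0) n = csum F m.
Proof.
  intros H; induction H.
  - apply csum_ext. intros k Hk. destruct (Nat.ltb_spec k m); [auto|lia].
  - simpl csum. rewrite IHle. destruct (Nat.ltb_spec m0 m); [lia|]. ring.
Qed.

Lemma Cmod_csum_le f n B : (forall k, (k < n)%nat -> Cmod (f k) <= B) -> Cmod (csum f n) <= INR n * B.
Proof.
  induction n; intros H; simpl csum.
  - rewrite Cmod_0. simpl. lra.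
  - rewrite S_INR. eapply Rle_trans; [apply Cmod_triangle|].
    assert (Cmod (csum f n) <= INR n * B) by (apply IHn; intros; apply H; lia).
    specialize (H n ltac:(lia)). lra.
Qed.

Lemma Csum_app l1 l2 : Csum (l1 ++ l2) = Cplus (Csum l1) (Csum l2).
Proof. induction l1; simpl. - ring. - unfold Csum in *. simpl. rewrite IHl1. ring. Qed.

Lemma Csum_map_seq f n : Csum (map f (seq 0 n)) = csum f n.
Proof.
  induction n. - reflexivity.
  - rewrite seq_S, map_app, Csum_app, IHn. simpl. unfold Csum; simpl. ring.
Qed.

Lemma Csum_filter (f : nat -> bool) (v : nat -> C) l :
  Csum (map v (filter f l)) = Csum (map (fun k => if f k then v k else RtoC 0) l).
Proof.
  induction l; simpl; auto. destruct (f a); simpl; unfold Csum in *; simpl; rewrite IHl; ring.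
Qed.

Lemma length_filter_Cmult (f : nat -> bool) (c : C) l :
  Cmult (RtoC (INR (length (filter f l)))) c = Csum (map (fun k => if f k then c else RtoC 0) l).
Proof.
  induction l. - unfold Csum; simpl. ring.
  - cbn [filter map]. destruct (f a); cbn [length]; unfold Csum in *; cbn [fold_right]; rewrite <- IHl.
    + rewrite S_INR, RtoC_plus. ring.
    + ring.
Qed.

Lemma INR_sub1 p : (1 <= p)%nat -> INR (p - 1) = INR p - 1.
Proof. intros. rewrite minus_INR by auto. simpl. ring. Qed.

(* The clique is [i < p], vertex 0 is [i = p - 1], and the path is [i >= p - 1]. *)
Lemma adjb_spec p i k : (1 <= p)%nat ->
  adjb p i k = (negb (Nat.eqb i k) &&
     ((Nat.ltb i p && Nat.ltb k p) ||
      (Nat.leb (p-1) i && Nat.leb (p-1) k && (Nat.eqb k (S i) || Nat.eqb i (S k)))))%bool.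
Proof.
  intros Hp. unfold adjb, vert.
  destruct (Z.eq_dec _ _) as [E|E];
  destruct (Nat.eqb_spec i k); destruct (Nat.ltb_spec i p); destruct (Nat.ltb_spec k p);
  destruct (Nat.leb_spec (p-1) i); destruct (Nat.leb_spec (p-1) k);
  destruct (Nat.eqb_spec k (S i)); destruct (Nat.eqb_spec i (S k)); simpl; try lia;
  repeat match goal with
  | |- context [Z.leb ?a ?b] => destruct (Z.leb_spec a b)
  | |- context [Z.eqb ?a ?b] => destruct (Z.eqb_spec a b)
  end; simpl; auto; lia.
Qed.

Lemma Lap_csum p v i :
  Lap p v i = csum (fun k => if adjb p i k then Cminus (v i) (v k) else RtoC 0) (nb_bound p i).
Proof.
  unfold Lap, deg. rewrite length_filter_Cmult, Csum_filter, !Csum_map_seq.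
  rewrite <- csum_minus. apply csum_ext. intros k _. destruct (adjb p i k); ring.
Qed.

Lemma Lap_clique p v i : (1 <= p)%nat -> (i < p)%nat ->
  Lap p v i = Cplus (Cminus (Cmult (RtoC (INR p)) (v i)) (csum v p))
                    (if Nat.eqb i (p-1) then Cminus (v i) (v p) else RtoC 0).
Proof.
  intros Hp Hi. rewrite Lap_csum. unfold nb_bound.
  rewrite (csum_ext _ (fun k => Cplus (if Nat.ltb k p then Cminus (v i) (v k) else RtoC 0)
                      (if Nat.eqb k p then (if Nat.eqb i (p-1) then Cminus (v i) (v k) else RtoC 0) else RtoC 0))).
  - rewrite csum_plus, csum_restrict by lia. rewrite csum_delta.
    destruct (Nat.ltb_spec p (p + i + 2)); [|lia].
    rewrite csum_minus, csum_const. ring.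
  - intros k Hk. rewrite adjb_spec by lia.
    destruct (Nat.eqb_spec i k); destruct (Nat.ltb_spec i p); destruct (Nat.ltb_spec k p);
    destruct (Nat.leb_spec (p-1) i); destruct (Nat.leb_spec (p-1) k);
    destruct (Nat.eqb_spec k (S i)); destruct (Nat.eqb_spec i (S k));
    destruct (Nat.eqb_spec k p); destruct (Nat.eqb_spec i (p-1)); simpl; subst; try lia; try ring.
Qed.

Lemma Lap_path p v i : (1 <= p)%nat -> (p <= i)%nat ->
  Lap p v i = Cminus (Cminus (Cmult (RtoC 2) (v i)) (v (i-1)%nat)) (v (S i)).
Proof.
  intros Hp Hi. rewrite Lap_csum. unfold nb_bound.
  rewrite (csum_ext _ (fun k => Cplus (if Nat.eqb k (i-1) then Cminus (v i) (v k) else RtoC 0)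
                      (if Nat.eqb k (S i) then Cminus (v i) (v k) else RtoC 0))).
  - rewrite csum_plus, !csum_delta.
    destruct (Nat.ltb_spec (i-1) (p + i + 2)); [|lia].
    destruct (Nat.ltb_spec (S i) (p + i + 2)); [|lia].
    apply C_eq_proj; simpl; lra.
  - intros k Hk. rewrite adjb_spec by lia.
    destruct (Nat.eqb_spec i k); destruct (Nat.ltb_spec i p); destruct (Nat.ltb_spec k p);
    destruct (Nat.leb_spec (p-1) i); destruct (Nat.leb_spec (p-1) k);
    destruct (Nat.eqb_spec k (S i)); destruct (Nat.eqb_spec i (S k));
    destruct (Nat.eqb_spec k (i-1)); simpl; subst; try lia; try ring.
Qed.

Lemma Lap_linear p a u v :
  Lap p (vadd (vscale a u) v) = vadd (vscale a (Lap p u)) (Lap p v).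
Proof.
  apply functional_extensionality. intros i. unfold vadd at 2. unfold vscale at 2. rewrite !Lap_csum.
  unfold vadd, vscale.
  rewrite <- csum_scal, <- csum_plus. apply csum_ext. intros k _.
  destruct (adjb p i k); ring.
Qed.

Lemma Lap_sub p u v i : Lap p (vsub u v) i = Cminus (Lap p u i) (Lap p v i).
Proof.
  rewrite !Lap_csum. unfold vsub. rewrite <- csum_minus. apply csum_ext. intros k _.
  destruct (adjb p i k); ring.
Qed.

Lemma Cmod_Lap_clique_le p v i : (1 <= p)%nat -> (i < p)%nat -> l2 v ->
  Cmod (Lap p v i) <= (2 * INR p + 2) * l2norm v.
Proof.
  intros Hp Hi Hv. rewrite Lap_clique by auto. set (B := l2norm v).
  assert (HB : forall k, Cmod (v k) <= B) by (intros; apply Cmod_le_l2norm; auto).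
  eapply Rle_trans; [apply Cmod_triangle|].
  assert (Cmod (Cminus (Cmult (RtoC (INR p)) (v i)) (csum v p)) <= 2 * INR p * B).
  { eapply Rle_trans; [apply Cmod_minus_le|]. rewrite Cmod_mult, Cmod_R, Rabs_pos_eq by apply pos_INR.
    pose proof (Cmod_csum_le v p B (fun k _ => HB k)).
    pose proof (Rmult_le_compat_l (INR p) _ _ (pos_INR p) (HB i)). lra. }
  assert (Cmod (if Nat.eqb i (p - 1) then Cminus (v i) (v p) else RtoC 0) <= 2 * B).
  { destruct (Nat.eqb i (p-1)).
    - eapply Rle_trans; [apply Cmod_minus_le|]. pose proof (HB i); pose proof (HB p); lra.
    - rewrite Cmod_0. pose proof (l2norm_nonneg v). unfold B. lra. }
  lra.
Qed.

Lemma Cmod_Lap_path_le p v i : (1 <= p)%nat -> (p <= i)%nat ->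
  Cmod (Lap p v i) <= 2 * Cmod (v i) + Cmod (v (i - 1)%nat) + Cmod (v (S i)).
Proof.
  intros Hp Hi. rewrite Lap_path by lia.
  eapply Rle_trans; [apply Cmod_minus_le|]. eapply Rle_trans; [apply Rplus_le_compat_r, Cmod_minus_le|].
  rewrite Cmod_mult, Cmod_R, Rabs_pos_eq by lra. lra.
Qed.

Lemma sqmod_Lap_le p v i : (1 <= p)%nat -> l2 v ->
  sqmod (Lap p v) i <= (if Nat.ltb i p then (2 * INR p + 2) ^ 2 * l2sq v else 0)
                     + 12 * sqmod v i + 3 * sqmod v (i - 1)%nat + 3 * sqmod v (S i).
Proof.
  intros Hp Hv. pose proof (sqmod_nonneg v i). pose proof (sqmod_nonneg v (i-1)%nat).
  pose proof (sqmod_nonneg v (S i)). unfold sqmod in *. destruct (Nat.ltb_spec i p).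
  - rewrite <- l2norm_sq, <- Rpow_mult_distr by auto.
    assert (0 <= (2 * INR p + 2) * l2norm v) by (pose proof (pos_INR p); pose proof (l2norm_nonneg v); nra).
    pose proof (pow2_le_compat _ _ (Cmod_ge_0 _) (Cmod_Lap_clique_le p v i Hp H2 Hv)). lra.
  - pose proof (pow2_le_compat _ _ (Cmod_ge_0 _) (Cmod_Lap_path_le p v i Hp ltac:(lia))).
    pose proof (sum3_sq_le (2 * Cmod (v i)) (Cmod (v (i - 1)%nat)) (Cmod (v (S i)))). nra.
Qed.

Lemma Lap_bounded p : (1 <= p)%nat -> bounded_op (Lap p).
Proof.
  intros Hp.
  set (K := INR p * (2 * INR p + 2) ^ 2 + 21).
  assert (HK : 0 <= K) by (unfold K; pose proof (pos_INR p); nra).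
  assert (H : forall v, l2 v -> forall N, psum (sqmod (Lap p v)) N <= K * l2sq v).
  { intros v Hv N. pose proof (l2sq_nonneg v Hv) as HS.
    eapply Rle_trans. apply psum_le. intros k _. apply (sqmod_Lap_le p v k Hp Hv).
    rewrite !psum_plus, !psum_scal.
    pose proof (psum_indicator_le ((2 * INR p + 2) ^ 2 * l2sq v) p N
                  ltac:(apply Rmult_le_pos; auto; apply pow2_ge_0)).
    pose proof (psum_le_l2sq v N Hv).
    pose proof (psum_pred_le (sqmod v) N (sqmod_nonneg v)).
    pose proof (psum_succ_le (sqmod v) N (sqmod_nonneg v)).
    pose proof (psum_le_l2sq v (S N) Hv).
    pose proof (sqmod_le_l2sq v 0 Hv). unfold sqmod in *.
    unfold K. nra. }
  destruct (bounded_of_psum_bound (Lap p) K HK H) as [H1 H2].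
  split; [exact H1|]. split; [|exact H2].
  intros a u v _ _. apply Lap_linear.
Qed.

Definition Lz (p : nat) (z : C) : Op := shift_op (Lap p) z.

Lemma Lz_eq p z v i : Lz p z v i = Cminus (Lap p v i) (Cmult z (v i)).
Proof. reflexivity. Qed.

Lemma Lz_sub p z u v i : Lz p z (vsub u v) i = Cminus (Lz p z u i) (Lz p z v i).
Proof. rewrite !Lz_eq, Lap_sub. unfold vsub. ring. Qed.

Lemma Lz_linear p z a u v :
  Lz p z (vadd (vscale a u) v) = vadd (vscale a (Lz p z u)) (Lz p z v).
Proof.
  apply functional_extensionality. intros i. unfold Lz, shift_op, vsub.
  rewrite Lap_linear. unfold vadd, vscale, vsub. ring.
Qed.

Lemma Lz_l2 p z v : (1 <= p)%nat -> l2 v -> l2 (Lz p z v).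
Proof.
  intros Hp Hv. unfold Lz, shift_op. apply l2_sub. apply Lap_bounded; auto. apply l2_scale; auto.
Qed.

Lemma Lz_path_rec p z x k : (1 <= p)%nat -> Lz p z x (p - 1 + S k)%nat = RtoC 0 ->
  x (p - 1 + S (S k))%nat = Cminus (Cmult (Cminus (RtoC 2) z) (x (p - 1 + S k)%nat)) (x (p - 1 + k)%nat).
Proof.
  intros Hp H. rewrite Lz_eq, Lap_path in H by lia.
  replace (p - 1 + S k - 1)%nat with (p - 1 + k)%nat in H by lia.
  replace (S (p - 1 + S k)) with (p - 1 + S (S k))%nat in H by lia.
  apply Ceq_minus. rewrite <- Copp_0, <- H. ring.
Qed.

Lemma Lz_eigen p z v : Lap p v = vscale z v -> forall i, Lz p z v i = RtoC 0.
Proof. intros H i. rewrite Lz_eq, H. unfold vscale. ring. Qed.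

Lemma eigen_of_Lz p z v : (forall i, Lz p z v i = RtoC 0) -> Lap p v = vscale z v.
Proof.
  intros H. apply functional_extensionality. intros i. specialize (H i). rewrite Lz_eq in H.
  apply Ceq_minus in H. auto.
Qed.

Lemma eigen_not_invertible p z v : l2 v -> v <> vzero -> (forall i, Lz p z v i = RtoC 0) ->
  ~ has_bounded_inverse (Lz p z).
Proof.
  intros Hv Hn HA [B [HB [H1 H2]]].
  assert (E : Lz p z v = vzero) by (apply functional_extensionality; intros; apply HA).
  specialize (H1 v Hv). rewrite E, bounded_op_vzero in H1 by auto. auto.
Qed.

(** * The path recurrence *)

Lemma path_root_exists (z : C) : exists r : C,
  r <> RtoC 0 /\ Cmod r <= 1 /\ Cminus (RtoC 2) z = Cplus r (Cinv r).
Proof.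
  destruct (Csqrt_exists (Cminus (Cmult (Cminus (RtoC 2) z) (Cminus (RtoC 2) z)) (RtoC 4))) as [s Hs].
  set (b := Cminus (RtoC 2) z) in *.
  set (r1 := Cdiv (Cplus b s) (RtoC 2)). set (r2 := Cdiv (Cminus b s) (RtoC 2)).
  assert (H2 : RtoC 2 <> RtoC 0) by (intros E; injection E; lra).
  assert (Hprod : Cmult r1 r2 = RtoC 1).
  { assert (H4 : RtoC 4 <> RtoC 0) by (intros E; injection E; lra).
    assert (E : Cmult r1 r2 = Cdiv (Cminus (Cmult b b) (Cmult s s)) (RtoC 4)).
    { unfold r1, r2. replace (RtoC 4) with (Cmult (RtoC 2) (RtoC 2)) by (rewrite <- RtoC_mult; f_equal; lra).
      field. }
    rewrite E, Hs. field; auto. }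
  assert (Hsum : Cplus r1 r2 = b) by (unfold r1, r2; field; auto).
  assert (Hr1 : r1 <> RtoC 0) by (intros E; rewrite E, Cmult_0_l in Hprod; apply C1_nz; auto).
  assert (Hr2 : r2 <> RtoC 0) by (intros E; rewrite E, Cmult_0_r in Hprod; apply C1_nz; auto).
  assert (Hm : Cmod r1 * Cmod r2 = 1) by (rewrite <- Cmod_mult, Hprod, Cmod_1; auto).
  pose proof (Cmod_ge_0 r1). pose proof (Cmod_ge_0 r2).
  destruct (Rle_lt_dec (Cmod r1) 1).
  - exists r1. split; auto. split; auto.
    assert (Cinv r1 = r2) by (rewrite <- (Cmult_1_l (Cinv r1)), <- Hprod; field; auto).
    rewrite H1. auto.
  - exists r2. split; auto. split. nra.
    assert (Cinv r2 = r1) by (rewrite <- (Cmult_1_l (Cinv r2)), <- Hprod; field; auto).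
    rewrite H1, <- Hsum. ring.
Qed.

Lemma z_of_path_root z r : Cminus (RtoC 2) z = Cplus r (Cinv r) -> z = Cminus (Cminus (RtoC 2) r) (Cinv r).
Proof. intros Hz. transitivity (Cminus (RtoC 2) (Cminus (RtoC 2) z)); [ring|]. rewrite Hz. ring. Qed.

Lemma unit_path_root_interval (z r : C) : Cmod r = 1 -> Cminus (RtoC 2) z = Cplus r (Cinv r) ->
  Im z = 0 /\ 0 <= Re z <= 4.
Proof.
  destruct z as [zx zy], r as [x y]. unfold Cmod, Re, Im. cbn [fst snd]. intros Hm H.
  assert (Hs : x ^ 2 + y ^ 2 = 1).
  { rewrite <- sqrt_1 in Hm. apply sqrt_inj in Hm; nra. }
  unfold Cinv, Cplus, Cminus, Copp, RtoC in H; cbn [fst snd] in H. rewrite Hs in H.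
  injection H. intros H1 H2. unfold Rdiv in *. rewrite Rinv_1 in *.
  assert (x * x <= 1) by nra. split. lra. split; nra.
Qed.

Lemma interval_unit_path_root (z : C) : Im z = 0 -> 0 <= Re z <= 4 ->
  exists r : C, r <> RtoC 0 /\ Cmod r = 1 /\ Cminus (RtoC 2) z = Cplus r (Cinv r).
Proof.
  destruct z as [zx zy]. simpl. intros Hy Hx. subst zy.
  set (a := (2 - zx) / 2).
  assert (Ha : a * a <= 1) by (unfold a; nra).
  set (y := sqrt (1 - a * a)).
  assert (Hy : y * y = 1 - a * a) by (apply sqrt_sqrt; lra).
  assert (Hn : a ^ 2 + y ^ 2 = 1) by nra.
  exists (a, y). split; [|split].
  - intros E. injection E. intros. subst. nra.
  - unfold Cmod; cbn [fst snd]. rewrite Hn. apply sqrt_1.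
  - unfold Cinv, Cminus, Copp, RtoC; cbn [fst snd]. rewrite Hn. apply C_eq_proj; simpl; unfold a; field.
Qed.

Lemma path_root_lt1 z r : r <> RtoC 0 -> Cmod r <= 1 -> Cminus (RtoC 2) z = Cplus r (Cinv r) ->
  ~ (Im z = 0 /\ 0 <= Re z <= 4) -> Cmod r < 1.
Proof.
  intros Hr0 Hr1 Hz Hn. destruct (Req_dec (Cmod r) 1). exfalso. apply Hn.
  apply (unit_path_root_interval z r); auto. lra.
Qed.

Definition tends0 (y : nat -> C) : Prop := is_lim_seq (fun n => Cmod (y n)) 0.

Lemma is_lim_seq_sqrt0 (a : nat -> R) : (forall n, 0 <= a n) -> is_lim_seq a 0 ->
  is_lim_seq (fun n => sqrt (a n)) 0.
Proof.
  intros Hpos H. apply is_lim_seq_Reals in H. apply is_lim_seq_Reals.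
  intros eps Heps. destruct (H (eps * eps)) as [N HN]. nra.
  exists N. intros n Hn. specialize (HN n Hn). unfold R_dist in *.
  rewrite Rminus_0_r in *. rewrite Rabs_pos_eq in * by (auto; apply sqrt_pos).
  rewrite <- (sqrt_square eps) by lra. apply sqrt_lt_1_alt. split; auto; lra.
Qed.

Lemma tends0_l2 v : l2 v -> tends0 v.
Proof.
  intros H. unfold tends0. apply is_lim_seq_ext with (fun n => sqrt (sqmod v n)).
  intros n. unfold sqmod. rewrite sqrt_pow2 by apply Cmod_ge_0. auto.
  apply is_lim_seq_sqrt0. apply sqmod_nonneg. apply ex_series_lim_0. exact H.
Qed.

Lemma tends0_le (y : nat -> C) (b : nat -> R) : (forall n, Cmod (y n) <= b n) -> is_lim_seq b 0 -> tends0 y.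
Proof.
  intros H Hb. unfold tends0. apply is_lim_seq_le_le with (fun _ => 0) b; auto.
  intros n. split; auto. apply Cmod_ge_0. apply is_lim_seq_const.
Qed.

Lemma tends0_add y1 y2 : tends0 y1 -> tends0 y2 -> tends0 (fun n => Cplus (y1 n) (y2 n)).
Proof.
  intros H1 H2. apply tends0_le with (fun n => Cmod (y1 n) + Cmod (y2 n)).
  intros; apply Cmod_triangle. replace (Finite 0) with (Finite (0 + 0)) by (f_equal; lra).
  apply is_lim_seq_plus'; auto.
Qed.

Lemma tends0_scale c y : tends0 y -> tends0 (fun n => Cmult c (y n)).
Proof.
  intros H. apply tends0_le with (fun n => Cmod c * Cmod (y n)).
  intros; rewrite Cmod_mult; lra. replace (Finite 0) with (Rbar_mult (Cmod c) 0) by (simpl; f_equal; lra).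
  apply is_lim_seq_scal_l; auto.
Qed.

Lemma tends0_sub y1 y2 : tends0 y1 -> tends0 y2 -> tends0 (fun n => Cminus (y1 n) (y2 n)).
Proof.
  intros H1 H2. apply (tends0_add y1 (fun n => Copp (y2 n))) in H1.
  - eapply is_lim_seq_ext; [|exact H1]. intros n. reflexivity.
  - apply tends0_le with (fun n => Cmod (y2 n)). intros; rewrite Cmod_opp; lra. auto.
Qed.

Lemma tends0_shift y m : tends0 y -> tends0 (fun n => y (m + n)%nat).
Proof.
  intros H. unfold tends0 in *. apply (is_lim_seq_incr_n _ m) in H.
  eapply is_lim_seq_ext; [|exact H]. intros n. simpl. f_equal. f_equal. lia.
Qed.

Lemma tends0_const_mod (y : nat -> C) : tends0 y -> (forall n, Cmod (y n) = Cmod (y O)) -> y O = RtoC 0.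
Proof.
  intros H Hc. apply Cmod_eq_0.
  assert (Rbar_le (Cmod (y O)) 0).
  { apply is_lim_seq_le with (fun _ => Cmod (y O)) (fun n => Cmod (y n)). intros n; specialize (Hc n); lra.
    apply is_lim_seq_const. exact H. }
  simpl in H0. pose proof (Cmod_ge_0 (y O)). lra.
Qed.

Lemma tends0_mod_lb (y : nat -> C) (e0 : R) : tends0 y -> (forall n, e0 <= Cmod (y n)) -> e0 <= 0.
Proof.
  intros H Hc.
  assert (Rbar_le e0 0).
  { apply is_lim_seq_le with (fun _ => e0) (fun n => Cmod (y n)). auto.
    apply is_lim_seq_const. exact H. }
  simpl in H0. lra.
Qed.

Lemma le_lim0 (a : R) (b : nat -> R) : (forall k, a <= b k) -> is_lim_seq b 0 -> a <= 0.
Proof.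
  intros H Hb. assert (Rbar_le a 0). { apply is_lim_seq_le with (fun _ => a) b; auto. apply is_lim_seq_const. }
  simpl in H0. auto.
Qed.

Lemma path_rec_geom (r : C) (y : nat -> C) : r <> RtoC 0 -> Cmod r <= 1 ->
  (forall k, y (S (S k)) = Cminus (Cmult (Cplus r (Cinv r)) (y (S k))) (y k)) ->
  tends0 y -> forall k, y k = Cmult (Cpow r k) (y O).
Proof.
  intros Hr0 Hr1 Hrec H0.
  set (e := fun k => Cminus (y (S k)) (Cmult r (y k))).
  assert (He : forall k, e (S k) = Cmult (Cinv r) (e k)).
  { intros k. unfold e. rewrite Hrec. field. auto. }
  assert (Hek : forall k, e k = Cmult (Cpow (Cinv r) k) (e O)).
  { induction k. simpl. ring. rewrite He, IHk. simpl. ring. }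
  assert (Hm : forall k, Cmod (e O) <= Cmod (e k)).
  { intros k. rewrite (Hek k), Cmod_mult, Cpow_inv, Cmod_inv, Cmod_pow by (auto; apply Cpow_nz; auto).
    assert (0 < Cmod r) by (apply Cmod_gt_0; auto).
    assert (Cmod r ^ k <= 1) by (rewrite <- (pow1 k); apply pow_incr; lra).
    assert (0 < Cmod r ^ k) by (apply pow_lt; auto).
    assert (1 <= / Cmod r ^ k). { rewrite <- Rinv_1. apply Rinv_le_contravar; lra. }
    pose proof (Cmod_ge_0 (e O)). nra. }
  assert (Hto : tends0 e).
  { unfold e. apply tends0_sub. apply (tends0_shift y 1). auto. apply tends0_scale. auto. }
  assert (He0 : e O = RtoC 0).
  { apply Cmod_eq_0. pose proof (tends0_mod_lb e (Cmod (e O)) Hto Hm). pose proof (Cmod_ge_0 (e O)). lra. }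
  assert (Hy : forall k, y (S k) = Cmult r (y k)).
  { intros k. assert (e k = RtoC 0) by (rewrite Hek, He0; ring). unfold e in H.
    apply Ceq_minus in H. auto. }
  induction k. simpl. ring. rewrite Hy, IHk. simpl. ring.
Qed.

Lemma path_rec_unit (r : C) (y : nat -> C) : r <> RtoC 0 -> Cmod r = 1 ->
  (forall k, y (S (S k)) = Cminus (Cmult (Cplus r (Cinv r)) (y (S k))) (y k)) ->
  tends0 y -> forall k, y k = RtoC 0.
Proof.
  intros Hr0 Hr1 Hrec H0.
  pose proof (path_rec_geom r y Hr0 ltac:(lra) Hrec H0) as Hg.
  assert (y O = RtoC 0).
  { apply tends0_const_mod; auto. intros n. rewrite Hg, Cmod_mult, Cmod_pow, Hr1, pow1. ring. }
  intros k. rewrite Hg, H. ring.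
Qed.

Definition CSeries (a : nat -> C) : C := (Series (fun n => fst (a n)), Series (fun n => snd (a n))).
Definition ex_CSeries (a : nat -> C) : Prop := ex_series (fun n => Cmod (a n)).

Lemma Rabs_fst_le (c : C) : Rabs (fst c) <= Cmod c.
Proof. apply re_le_Cmod. Qed.
Lemma Rabs_snd_le (c : C) : Rabs (snd c) <= Cmod c.
Proof.
  destruct c as [x y]. unfold Cmod; simpl. rewrite <- sqrt_Rsqr_abs. apply sqrt_le_1_alt.
  unfold Rsqr. nra.
Qed.

Lemma ex_CSeries_fst a : ex_CSeries a -> ex_series (fun n => fst (a n)).
Proof.
  intros H. apply (ex_series_le (fun n => fst (a n)) (fun n => Cmod (a n))); auto.
  intros n. apply Rabs_fst_le.
Qed.
Lemma ex_CSeries_snd a : ex_CSeries a -> ex_series (fun n => snd (a n)).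
Proof.
  intros H. apply (ex_series_le (fun n => snd (a n)) (fun n => Cmod (a n))); auto.
  intros n. apply Rabs_snd_le.
Qed.

Lemma ex_CSeries_le a (b : nat -> R) : (forall n, Cmod (a n) <= b n) -> ex_series b -> ex_CSeries a.
Proof.
  intros H Hb. unfold ex_CSeries. apply (ex_series_le (fun n => Cmod (a n)) b); auto.
  intros n. unfold norm; simpl. unfold abs; simpl. rewrite Rabs_pos_eq by apply Cmod_ge_0. auto.
Qed.

Lemma CSeries_ext a b : (forall n, a n = b n) -> CSeries a = CSeries b.
Proof.
  intros H. unfold CSeries. f_equal; apply Series_ext; intros; rewrite H; auto.
Qed.

Lemma CSeries_shift a : ex_CSeries a -> CSeries a = Cplus (a O) (CSeries (fun n => a (S n))).
Proof.
  intros H. unfold CSeries. rewrite (Series_incr_1 (fun n => fst (a n))) by (apply ex_CSeries_fst; auto).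
  rewrite (Series_incr_1 (fun n => snd (a n))) by (apply ex_CSeries_snd; auto).
  destruct (a O). reflexivity.
Qed.

Lemma CSeries_linear c a b : ex_CSeries a -> ex_CSeries b ->
  CSeries (fun n => Cplus (Cmult c (a n)) (b n)) = Cplus (Cmult c (CSeries a)) (CSeries b).
Proof.
  intros Ha Hb. pose proof (ex_CSeries_fst a Ha). pose proof (ex_CSeries_snd a Ha).
  pose proof (ex_CSeries_fst b Hb). pose proof (ex_CSeries_snd b Hb).
  destruct c as [c1 c2]. unfold CSeries, Cplus, Cmult; simpl.
  f_equal.
  - rewrite Series_plus, Series_minus, !Series_scal_l; auto.
    apply (ex_series_scal_l c1 (fun n => fst (a n))); auto.
    apply (ex_series_scal_l c2 (fun n => snd (a n))); auto.
    apply (ex_series_minus (fun n => c1 * fst (a n)) (fun n => c2 * snd (a n))).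
    apply (ex_series_scal_l c1 (fun n => fst (a n))); auto.
    apply (ex_series_scal_l c2 (fun n => snd (a n))); auto.
  - rewrite Series_plus, Series_plus, !Series_scal_l; auto.
    apply (ex_series_scal_l c1 (fun n => snd (a n))); auto.
    apply (ex_series_scal_l c2 (fun n => fst (a n))); auto.
    apply (ex_series_plus (fun n => c1 * snd (a n)) (fun n => c2 * fst (a n))).
    apply (ex_series_scal_l c1 (fun n => snd (a n))); auto.
    apply (ex_series_scal_l c2 (fun n => fst (a n))); auto.
Qed.

Lemma Cmod_le_fst_snd (c : C) : Cmod c <= Rabs (fst c) + Rabs (snd c).
Proof.
  destruct c as [x y]. unfold Cmod; simpl.
  rewrite <- (sqrt_pow2 (Rabs x + Rabs y)) by (pose proof (Rabs_pos x); pose proof (Rabs_pos y); lra).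
  apply sqrt_le_1_alt. pose proof (Rabs_pos x); pose proof (Rabs_pos y).
  assert (x * x = Rabs x * Rabs x) by (rewrite <- Rabs_mult, Rabs_pos_eq; nra).
  assert (y * y = Rabs y * Rabs y) by (rewrite <- Rabs_mult, Rabs_pos_eq; nra). simpl. nra.
Qed.

Lemma Cmod_CSeries_le a : ex_CSeries a -> Cmod (CSeries a) <= 2 * Series (fun n => Cmod (a n)).
Proof.
  intros H. eapply Rle_trans; [apply Cmod_le_fst_snd|]. unfold CSeries; simpl.
  assert (Rabs (Series (fun n => fst (a n))) <= Series (fun n => Cmod (a n))).
  { eapply Rle_trans. apply Series_Rabs.
    apply (ex_series_le (fun n => Rabs (fst (a n))) (fun n => Cmod (a n))); auto.
    intros n. unfold norm; simpl; unfold abs; simpl. rewrite Rabs_Rabsolu. apply Rabs_fst_le.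
    apply Series_le; auto. intros n; split. apply Rabs_pos. apply Rabs_fst_le. }
  assert (Rabs (Series (fun n => snd (a n))) <= Series (fun n => Cmod (a n))).
  { eapply Rle_trans. apply Series_Rabs.
    apply (ex_series_le (fun n => Rabs (snd (a n))) (fun n => Cmod (a n))); auto.
    intros n. unfold norm; simpl; unfold abs; simpl. rewrite Rabs_Rabsolu. apply Rabs_snd_le.
    apply Series_le; auto. intros n; split. apply Rabs_pos. apply Rabs_snd_le. }
  lra.
Qed.

Lemma ex_series_zero : ex_series (fun _ : nat => 0).
Proof.
  apply ex_series_ext with (fun n => 0 * (/2) ^ n). intros n; apply Rmult_0_l.
  apply (ex_series_scal_l 0 (fun n => (/2) ^ n)). apply ex_series_geom. rewrite Rabs_pos_eq; lra.
Qed.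

Lemma ex_CSeries_zero : ex_CSeries (fun _ => RtoC 0).
Proof. apply ex_CSeries_le with (fun _ => 0). intros; rewrite Cmod_0; lra. apply ex_series_zero. Qed.

Lemma Series_zero : Series (fun _ : nat => 0) = 0.
Proof. rewrite (Series_ext _ (fun n => 0 * (/2) ^ n)) by (intros; ring). rewrite Series_scal_l. ring. Qed.

Lemma CSeries_zero : CSeries (fun _ => RtoC 0) = RtoC 0.
Proof. unfold CSeries. simpl. rewrite Series_zero. reflexivity. Qed.

Lemma CSeries_RtoC (b : nat -> R) : CSeries (fun m => RtoC (b m)) = RtoC (Series b).
Proof. unfold CSeries. apply C_eq_proj; simpl. reflexivity. apply Series_zero. Qed.

Lemma CSeries_scal c a : ex_CSeries a -> CSeries (fun n => Cmult c (a n)) = Cmult c (CSeries a).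
Proof.
  intros H. rewrite (CSeries_ext _ (fun n => Cplus (Cmult c (a n)) (RtoC 0))) by (intros; ring).
  rewrite CSeries_linear; auto. rewrite CSeries_zero. ring. apply ex_CSeries_zero.
Qed.

(* With [2 - z = r + 1/r], the path operator [x_k |-> (2 - z) x_k - x_(k-1) - x_(k+1)] factors
   through the first-order operators [x |-> x_(k+1) - r x_k] and [x |-> x_(k+1) - x_k / r].
   For [|r| < 1], [geom_tail] inverts the second one by backward summation, and [path_sol]
   inverts the first one forward from [0], giving the l2 solution with vanishing first entry. *)
Section PathSolver.
Variable r : C.
Hypothesis Hr0 : r <> RtoC 0.
Hypothesis Hr1 : Cmod r < 1.

Lemma Cmod_r_bounds : 0 <= Cmod r < 1.
Proof. split; auto. apply Cmod_ge_0. Qed.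

Definition geom_tail (f : nat -> C) (j : nat) : C := CSeries (fun m => Cmult (Cpow r m) (f (j + m)%nat)).

Lemma geom_tail_summable f j : l2 f -> ex_CSeries (fun m => Cmult (Cpow r m) (f (j + m)%nat)).
Proof.
  intros Hf. apply ex_CSeries_le with (fun m => Cmod r ^ m * l2norm f).
  intros m. rewrite Cmod_mult, Cmod_pow. apply Rmult_le_compat_l.
  apply pow_le, Cmod_ge_0. apply Cmod_le_l2norm; auto.
  apply ex_series_scal_r. apply ex_series_geom. rewrite Rabs_pos_eq; apply Cmod_r_bounds.
Qed.

Lemma geom_tail_rec f j : l2 f -> geom_tail f j = Cplus (f j) (Cmult r (geom_tail f (S j))).
Proof.
  intros Hf. unfold geom_tail. rewrite CSeries_shift by (apply geom_tail_summable; auto).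
  rewrite Nat.add_0_r. simpl Cpow. rewrite Cmult_1_l. f_equal.
  rewrite <- CSeries_scal by (apply geom_tail_summable; auto). apply CSeries_ext. intros n.
  simpl Cpow. rewrite Nat.add_succ_r. simpl. ring.
Qed.

Lemma geom_tail_bound f j : l2 f -> Cmod (geom_tail f j) <= 2 * l2norm f / (1 - Cmod r).
Proof.
  intros Hf. pose proof Cmod_r_bounds. unfold geom_tail.
  eapply Rle_trans. apply Cmod_CSeries_le. apply geom_tail_summable; auto.
  assert (Series (fun n => Cmod (Cmult (Cpow r n) (f (j + n)%nat))) <= l2norm f / (1 - Cmod r)).
  { eapply Rle_trans. apply Series_le with (b := fun m => Cmod r ^ m * l2norm f).
    intros n; split. apply Cmod_ge_0. rewrite Cmod_mult, Cmod_pow.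
    apply Rmult_le_compat_l. apply pow_le; lra. apply Cmod_le_l2norm; auto.
    apply ex_series_scal_r. apply ex_series_geom. rewrite Rabs_pos_eq; lra.
    rewrite Series_scal_r, Series_geom by (rewrite Rabs_pos_eq; lra). unfold Rdiv. lra. }
  unfold Rdiv in *. lra.
Qed.

Lemma geom_tail_linear a f1 f2 j : l2 f1 -> l2 f2 ->
  geom_tail (vadd (vscale a f1) f2) j = Cplus (Cmult a (geom_tail f1 j)) (geom_tail f2 j).
Proof.
  intros H1 H2. unfold geom_tail. rewrite <- CSeries_linear by (apply geom_tail_summable; auto).
  apply CSeries_ext. intros n. unfold vadd, vscale. ring.
Qed.

Definition K_tail : R := 4 * Cmod r / (1 - Cmod r) ^ 3 + 1 / (1 - Cmod r) ^ 2.

Lemma psum_geom_tail_le f N : l2 f -> psum (sqmod (geom_tail f)) N <= K_tail * l2sq f.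
Proof.
  intros Hf. pose proof Cmod_r_bounds as Hs. set (g := geom_tail f).
  assert (HS : 0 <= l2sq f) by (apply l2sq_nonneg; auto).
  assert (Hpt : forall j, sqmod g j <= Cmod r * sqmod g (S j) + sqmod f j / (1 - Cmod r)).
  { intros j. unfold sqmod, g. rewrite (geom_tail_rec f j Hf) at 1.
    assert (Cmod (Cplus (f j) (Cmult r (geom_tail f (S j)))) <= Cmod r * Cmod (geom_tail f (S j)) + Cmod (f j)).
    { eapply Rle_trans. apply Cmod_triangle. rewrite Cmod_mult. lra. }
    eapply Rle_trans. apply pow2_le_compat. apply Cmod_ge_0. exact H.
    apply sq_convex_le; auto. }
  assert (Hsum : psum (sqmod g) N <= Cmod r * (psum (sqmod g) N + sqmod g N) + l2sq f / (1 - Cmod r)).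
  { eapply Rle_trans. apply psum_le. intros k _. apply Hpt.
    rewrite psum_plus, psum_scal.
    rewrite (psum_ext (fun k => sqmod f k / (1 - Cmod r)) (fun k => / (1 - Cmod r) * sqmod f k)) by (intros; unfold Rdiv; ring).
    rewrite psum_scal.
    assert (psum (fun k => sqmod g (S k)) N = psum (sqmod g) N + sqmod g N - sqmod g O).
    { pose proof (psum_shift (sqmod g) N). simpl in H. lra. }
    rewrite H. pose proof (sqmod_nonneg g O). pose proof (psum_le_l2sq f N Hf).
    assert (0 < / (1 - Cmod r)) by (apply Rinv_0_lt_compat; lra).
    assert (Cmod r * (psum (sqmod g) N + sqmod g N - sqmod g 0%nat) <= Cmod r * (psum (sqmod g) N + sqmod g N)) by nra.
    unfold Rdiv. nra. }
  assert (HgN : sqmod g N <= 4 * l2sq f / (1 - Cmod r) ^ 2).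
  { unfold sqmod, g. eapply Rle_trans. apply pow2_le_compat. apply Cmod_ge_0. apply geom_tail_bound; auto.
    unfold l2norm. fold (l2sq f). unfold Rdiv. rewrite !Rpow_mult_distr. rewrite pow2_sqrt by auto.
    rewrite pow_inv. unfold l2sq, sqmod. right. ring. }
  assert (Hfin : (1 - Cmod r) * psum (sqmod g) N <= Cmod r * (4 * l2sq f / (1 - Cmod r) ^ 2) + l2sq f / (1 - Cmod r)) by nra.
  unfold K_tail. apply Rmult_le_reg_l with (1 - Cmod r). lra.
  eapply Rle_trans. exact Hfin. right. field. lra.
Qed.

Fixpoint path_sol (f : nat -> C) (k : nat) : C :=
  match k with O => RtoC 0 | S k' => Cmult r (Cplus (path_sol f k') (geom_tail f k')) end.

Definition K_path : R := Cmod r ^ 2 * K_tail / (1 - Cmod r) ^ 2.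

Lemma K_tail_nonneg : 0 <= K_tail.
Proof.
  pose proof Cmod_r_bounds. unfold K_tail. apply Rplus_le_le_0_compat.
  apply Rmult_le_pos. lra. apply Rlt_le, Rinv_0_lt_compat, pow_lt; lra.
  apply Rmult_le_pos. lra. apply Rlt_le, Rinv_0_lt_compat, pow_lt; lra.
Qed.

Lemma K_path_nonneg : 0 <= K_path.
Proof.
  pose proof Cmod_r_bounds. pose proof K_tail_nonneg. unfold K_path.
  apply Rmult_le_pos. apply Rmult_le_pos; auto. apply pow2_ge_0.
  apply Rlt_le, Rinv_0_lt_compat, pow_lt. lra.
Qed.

Lemma psum_path_sol_le f N : l2 f -> psum (sqmod (path_sol f)) N <= K_path * l2sq f.
Proof.
  intros Hf. pose proof Cmod_r_bounds as Hs.
  assert (Hc : 0 <= Cmod r ^ 2 / (1 - Cmod r))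
    by (apply Rmult_le_pos; [apply pow2_ge_0|apply Rlt_le, Rinv_0_lt_compat; lra]).
  replace (K_path * l2sq f) with (Cmod r ^ 2 / (1 - Cmod r) * (K_tail * l2sq f) / (1 - Cmod r))
    by (unfold K_path; field; lra).
  apply (psum_forward_rec_le _ (fun k => Cmod r ^ 2 / (1 - Cmod r) * sqmod (geom_tail f) k)); auto.
  - apply sqmod_nonneg.
  - unfold sqmod. simpl. rewrite Cmod_0. ring.
  - intros k. unfold sqmod. simpl path_sol.
    assert (Cmod (Cmult r (Cplus (path_sol f k) (geom_tail f k)))
            <= Cmod r * Cmod (path_sol f k) + Cmod r * Cmod (geom_tail f k)).
    { rewrite Cmod_mult. pose proof (Cmod_triangle (path_sol f k) (geom_tail f k)). nra. }
    eapply Rle_trans. apply pow2_le_compat. apply Cmod_ge_0. exact H.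
    eapply Rle_trans. apply sq_convex_le; auto. right. field. lra.
  - intros M. rewrite psum_scal. apply Rmult_le_compat_l; auto. apply psum_geom_tail_le; auto.
Qed.

Lemma path_sol_linear a f1 f2 k : l2 f1 -> l2 f2 ->
  path_sol (vadd (vscale a f1) f2) k = Cplus (Cmult a (path_sol f1 k)) (path_sol f2 k).
Proof.
  intros H1 H2. induction k; simpl. ring. rewrite IHk, geom_tail_linear by auto. ring.
Qed.

Lemma path_sol_rec f k : l2 f ->
  Cminus (Cminus (Cmult (Cplus r (Cinv r)) (path_sol f (S k))) (path_sol f k)) (path_sol f (S (S k))) = f k.
Proof.
  intros Hf. simpl path_sol at 1 3. simpl path_sol at 2.
  rewrite (geom_tail_rec f k Hf). field. auto.
Qed.

Lemma path_sol1_bound f : l2 f -> Cmod (path_sol f 1) <= 2 * Cmod r / (1 - Cmod r) * l2norm f.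
Proof.
  intros Hf. simpl path_sol. rewrite Cmod_mult, Cplus_0_l.
  pose proof (geom_tail_bound f 0 Hf). pose proof Cmod_r_bounds.
  apply Rle_trans with (Cmod r * (2 * l2norm f / (1 - Cmod r))). apply Rmult_le_compat_l; lra.
  right. field. lra.
Qed.

End PathSolver.

(** * The eigenvalue lam_star *)

Section LambdaStar.
Variable p : nat.
Hypothesis Hp : (5 <= p)%nat.

(* The two roots of [(p - 2) r^2 - (p - 2) r - 1]; [r_minus] lies in (-1, 0). *)
Definition r_minus : R := 1/2 - sqrt (1/4 + 1 / (INR p - 2)).
Definition r_plus : R := 1/2 + sqrt (1/4 + 1 / (INR p - 2)).
Definition lam_star : R := INR p - (INR p - 1) * r_minus.

Lemma INR_p_ge5 : 5 <= INR p.
Proof. replace 5 with (INR 5) by (simpl; lra). apply le_INR; auto. Qed.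

Lemma sqrt_disc_sq : sqrt (1/4 + 1 / (INR p - 2)) * sqrt (1/4 + 1 / (INR p - 2)) = 1/4 + 1/(INR p - 2).
Proof.
  pose proof INR_p_ge5. apply sqrt_sqrt.
  assert (0 < 1 / (INR p - 2)) by (apply Rdiv_lt_0_compat; lra). lra.
Qed.

Lemma r_plus_gt1 : 1 < r_plus.
Proof.
  pose proof INR_p_ge5. pose proof sqrt_disc_sq. unfold r_plus.
  pose proof (sqrt_pos (1/4 + 1/(INR p - 2))).
  assert (0 < 1/(INR p - 2)) by (apply Rdiv_lt_0_compat; lra). nra.
Qed.

Lemma r_minus_quad : (INR p - 2) * r_minus * r_minus - (INR p - 2) * r_minus - 1 = 0.
Proof.
  pose proof INR_p_ge5. pose proof sqrt_disc_sq. unfold r_minus.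
  set (s := sqrt (1/4 + 1/(INR p - 2))) in *.
  replace ((INR p - 2) * (1 / 2 - s) * (1 / 2 - s) - (INR p - 2) * (1 / 2 - s) - 1)
    with ((INR p - 2) * (s * s - 1/4) - 1) by field.
  rewrite H0. field. lra.
Qed.

Lemma r_minus_bounds : -2 / (INR p - 1) < r_minus < 0.
Proof.
  pose proof INR_p_ge5. pose proof sqrt_disc_sq. unfold r_minus.
  set (s := sqrt (1/4 + 1/(INR p - 2))) in *.
  assert (Hs0 : 0 <= s) by apply sqrt_pos.
  assert (h1 : 0 < 1 / (INR p - 2)) by (apply Rdiv_lt_0_compat; lra).
  assert (h2 : 1 / (INR p - 2) < 2 / (INR p - 1)).
  { apply Rmult_lt_reg_r with ((INR p - 2) * (INR p - 1)). nra.
    field_simplify; lra. }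
  assert (h3 : 0 < 2 / (INR p - 1)) by (apply Rdiv_lt_0_compat; lra).
  split.
  - assert (s < 1/2 + 2 / (INR p - 1)). { apply Rsqr_incrst_0; unfold Rsqr; nra. } lra.
  - nra.
Qed.

Lemma r_minus_gt_m1 : -1 < r_minus.
Proof.
  pose proof r_minus_bounds. pose proof INR_p_ge5.
  assert (2 / (INR p - 1) <= 1/2). { apply Rmult_le_reg_r with (INR p - 1). lra. field_simplify; lra. }
  lra.
Qed.

Lemma r_minus_neq0 : r_minus <> 0.
Proof. pose proof r_minus_bounds. lra. Qed.

Lemma lam_star_bounds : INR p < lam_star < INR p + 2.
Proof.
  pose proof r_minus_bounds as [h1 h2]. pose proof INR_p_ge5. unfold lam_star. split. nra.
  assert (-(INR p - 1) * r_minus < 2).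
  { apply Rmult_lt_compat_l with (r := INR p - 1) in h1; [|lra].
    replace ((INR p - 1) * (-2 / (INR p - 1))) with (-2) in h1 by (field; lra). lra. }
  lra.
Qed.

Lemma lam_star_path_root : 2 - lam_star = r_minus + / r_minus.
Proof.
  pose proof r_minus_quad. pose proof INR_p_ge5. pose proof r_minus_neq0. unfold lam_star.
  assert (/ r_minus = (INR p - 2) * (r_minus - 1)).
  { apply Rmult_eq_reg_l with r_minus; auto. rewrite Rinv_r by auto. nra. }
  rewrite H2. ring.
Qed.

Lemma quad_roots (r : C) :
  Cplus (Cmult (RtoC (INR p - 2)) (Cmult r (Cminus (RtoC 1) r))) (RtoC 1) = RtoC 0 ->
  r = RtoC r_minus \/ r = RtoC r_plus.
Proof.
  intros Hg. pose proof r_minus_quad. pose proof INR_p_ge5.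
  assert (Hf : Cmult (Cminus r (RtoC r_minus)) (Cminus r (RtoC r_plus)) = RtoC 0).
  { apply (Cmult_eq_reg_l (RtoC (INR p - 2))). 2: { intros E. injection E. lra. }
    assert (E1 : Cplus (RtoC r_minus) (RtoC r_plus) = RtoC 1)
      by (rewrite <- RtoC_plus; f_equal; unfold r_minus, r_plus; lra).
    assert (E2 : Cmult (RtoC (INR p - 2)) (Cmult (RtoC r_minus) (RtoC r_plus)) = RtoC (-1)).
    { rewrite <- !RtoC_mult. f_equal. assert (r_plus = 1 - r_minus) by (unfold r_plus, r_minus; lra).
      rewrite H1. nra. }
    set (c := RtoC (INR p - 2)) in *.
    transitivity (Cplus (Cminus (Cmult c (Cmult r r)) (Cmult (Cmult c (Cplus (RtoC r_minus) (RtoC r_plus))) r))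
                        (Cmult c (Cmult (RtoC r_minus) (RtoC r_plus)))); [ring|].
    rewrite E1, E2, Cmult_0_r. rewrite <- Copp_0. rewrite <- Hg at 1. unfold c. ring. }
  apply Cmult_eq_0 in Hf. destruct Hf as [Hf|Hf]; [left|right]; apply Ceq_minus; auto.
Qed.

(* [secular z r = 0] is the condition for a kernel vector of [L - z] whose path part is [r^k]:
   it combines the equations at vertex 0 and on the clique. *)
Definition secular (z r : C) : C :=
  Cminus (Cmult (Cminus (RtoC 1) z) (Cminus (Cminus (RtoC (INR p + 1)) z) r)) (Cminus (RtoC (INR p)) z).

Lemma secular_factor (z r : C) : r <> RtoC 0 -> Cminus (RtoC 2) z = Cplus r (Cinv r) ->
  Cmult (Cmult r r) (secular z r) =
  Cmult (Cminus (RtoC 1) r) (Cplus (Cmult (RtoC (INR p - 2)) (Cmult r (Cminus (RtoC 1) r))) (RtoC 1)).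
Proof.
  intros Hr0 Hz.
  unfold secular. rewrite (z_of_path_root z r Hz). rewrite !RtoC_plus, !RtoC_minus. field; auto.
Qed.

Lemma secular_eq0_inv (z r : C) : r <> RtoC 0 -> Cmod r < 1 ->
  Cminus (RtoC 2) z = Cplus r (Cinv r) -> secular z r = RtoC 0 ->
  r = RtoC r_minus /\ z = RtoC lam_star.
Proof.
  intros Hr0 Hr1 Hz HD.
  pose proof (secular_factor z r Hr0 Hz) as Hg. rewrite HD, Cmult_0_r in Hg. symmetry in Hg.
  apply Cmult_eq_0 in Hg. destruct Hg as [Hg|Hg].
  - exfalso. apply Ceq_minus in Hg. rewrite <- Hg, Cmod_1 in Hr1. lra.
  - destruct (quad_roots r Hg) as [Er|Er].
    + split; auto.
      transitivity (Cminus (RtoC 2) (Cminus (RtoC 2) z)); [ring|]. rewrite Hz, Er.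
      rewrite <- RtoC_inv by apply r_minus_neq0.
      rewrite <- !RtoC_plus, <- RtoC_minus. f_equal. pose proof lam_star_path_root. lra.
    + exfalso. pose proof r_plus_gt1.
      rewrite Er, Cmod_R, Rabs_pos_eq in Hr1; lra.
Qed.

Lemma secular_lam_star : secular (RtoC lam_star) (RtoC r_minus) = RtoC 0.
Proof.
  pose proof r_minus_quad as Hq.
  unfold secular, lam_star. apply C_eq_proj; simpl; [|ring].
  transitivity ((INR p - 1) * ((INR p - 2) * r_minus * r_minus - (INR p - 2) * r_minus - 1));
    [ring|rewrite Hq; ring].
Qed.

End LambdaStar.

(** * The resolvent off the spectrum *)

Section Assemble.

Variable p : nat.
Hypothesis Hp : (5 <= p)%nat.
Variables z r : C.
Hypothesis Hr0 : r <> RtoC 0.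
Hypothesis Hr1 : Cmod r < 1.
Hypothesis Hz : Cminus (RtoC 2) z = Cplus r (Cinv r).

Definition path_part (w : nat -> C) : nat -> C := fun m => w (p + m)%nat.

Lemma path_part_linear a u v :
  path_part (vadd (vscale a u) v) = vadd (vscale a (path_part u)) (path_part v).
Proof. reflexivity. Qed.

(* Candidate preimages of [w] under [L - z]: free values [u] on the clique, and on the path the
   particular solution [path_sol] of the path equations plus [al r^k].  The path equations then
   hold automatically (Lz_assemble_path), leaving only the p equations at the clique. *)
Definition assemble (u : nat -> C) (al : C) (w : nat -> C) : nat -> C :=
  fun i => if Nat.ltb i (p - 1) then u i
           else Cplus (path_sol r (path_part w) (i - (p - 1))) (Cmult al (Cpow r (i - (p - 1)))).

Lemma assemble_path u al w k : assemble u al w (p - 1 + k)%nat = Cplus (path_sol r (path_part w) k) (Cmult al (Cpow r k)).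
Proof.
  unfold assemble. destruct (Nat.ltb_spec (p - 1 + k) (p - 1)); [lia|].
  replace (p - 1 + k - (p - 1))%nat with k by lia. reflexivity.
Qed.

Lemma assemble_clique u al w i : (i < p - 1)%nat -> assemble u al w i = u i.
Proof. intros H. unfold assemble. destruct (Nat.ltb_spec i (p - 1)); [auto|lia]. Qed.

Lemma Lz_assemble_path u al w i : (p <= i)%nat -> l2 w -> Lz p z (assemble u al w) i = w i.
Proof.
  intros Hi Hw. set (k := (i - p)%nat).
  assert (Ei : i = (p - 1 + S k)%nat) by (unfold k; lia).
  rewrite Ei. rewrite Lz_eq, Lap_path by lia.
  replace (p - 1 + S k - 1)%nat with (p - 1 + k)%nat by lia.
  replace (S (p - 1 + S k)) with (p - 1 + S (S k))%nat by lia.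
  rewrite !assemble_path.
  replace (w (p - 1 + S k)%nat) with (path_part w k) by (unfold path_part; f_equal; lia).
  rewrite <- (path_sol_rec r Hr0 Hr1 (path_part w) k (l2_shift p w Hw)).
  rewrite (z_of_path_root z r Hz).
  simpl Cpow. field. auto.
Qed.

Lemma csum_assemble u al w : csum (assemble u al w) p = Cplus (csum u (p - 1)) al.
Proof.
  replace p with (S (p - 1)) at 1 by lia. rewrite csum_S.
  rewrite (csum_ext _ u) by (intros; apply assemble_clique; auto).
  replace (assemble u al w (p - 1)%nat) with (assemble u al w (p - 1 + 0)%nat) by (f_equal; lia).
  rewrite assemble_path. simpl. ring.
Qed.

Lemma Lz_assemble_clique u al w i : (i < p - 1)%nat ->
  Lz p z (assemble u al w) i = Cminus (Cmult (Cminus (RtoC (INR p)) z) (u i)) (Cplus (csum u (p - 1)) al).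
Proof.
  intros Hi. rewrite Lz_eq, Lap_clique by lia. rewrite csum_assemble, assemble_clique by auto.
  destruct (Nat.eqb_spec i (p - 1)); [lia|]. ring.
Qed.

Lemma Lz_assemble_zero u al w :
  Lz p z (assemble u al w) (p - 1)%nat =
  Cminus (Cminus (Cmult (Cminus (RtoC (INR p + 1)) z) al) (Cplus (csum u (p - 1)) al))
         (Cplus (path_sol r (path_part w) 1) (Cmult al r)).
Proof.
  rewrite Lz_eq, Lap_clique by lia. rewrite csum_assemble.
  destruct (Nat.eqb_spec (p - 1) (p - 1)); [|lia].
  replace (assemble u al w (p - 1)%nat) with (assemble u al w (p - 1 + 0)%nat) by (f_equal; lia).
  replace (assemble u al w p) with (assemble u al w (p - 1 + 1)%nat) by (f_equal; lia).
  rewrite !assemble_path.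
  simpl path_sol. simpl Cpow. rewrite RtoC_plus. ring.
Qed.

Lemma psum_shifted_path_sol_le w q N : l2 w ->
  psum (fun i => if Nat.ltb i q then 0 else sqmod (path_sol r (path_part w)) (i - q)%nat) N
  <= K_path r * l2sq w.
Proof.
  intros Hw. rewrite psum_shift_right.
  eapply Rle_trans. apply psum_path_sol_le; auto. apply l2_shift; auto.
  apply Rmult_le_compat_l. apply K_path_nonneg; auto. apply l2sq_shift_le; auto.
Qed.

Lemma psum_shifted_geom_le (al : C) q N :
  psum (fun i => if Nat.ltb i q then 0 else Cmod (Cmult al (Cpow r (i - q))) ^ 2) N
  <= Cmod al ^ 2 / (1 - Cmod r ^ 2).
Proof.
  pose proof (Cmod_r_bounds r Hr1).
  rewrite (psum_ext _ (fun i => if Nat.ltb i q then 0 else (Cmod al ^ 2 * (Cmod r ^ 2) ^ (i - q)))).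
  - rewrite (psum_shift_right (fun i => Cmod al ^ 2 * (Cmod r ^ 2) ^ i) q N), psum_scal.
    unfold Rdiv. apply Rmult_le_compat_l. apply pow2_ge_0.
    apply psum_geom_le. split. apply pow2_ge_0. nra.
  - intros k _. destruct (Nat.ltb k q); auto.
    rewrite Cmod_mult, Cmod_pow, <- pow_mult, Rpow_mult_distr, <- pow_mult.
    do 2 f_equal. lia.
Qed.

Lemma assemble_l2 u al w : l2 w -> l2 (assemble u al w) /\
  l2sq (assemble u al w) <= 3 * (psum (sqmod u) (p - 1) + K_path r * l2sq w + Cmod al ^ 2 / (1 - Cmod r ^ 2)).
Proof.
  intros Hw. apply l2_of_psum_bound. intros N.
  set (q := (p - 1)%nat).
  set (a1 := fun i => if Nat.ltb i q then sqmod u i else 0).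
  set (a2 := fun i => if Nat.ltb i q then 0 else sqmod (path_sol r (path_part w)) (i - q)%nat).
  set (a3 := fun i => if Nat.ltb i q then 0 else Cmod (Cmult al (Cpow r (i - q))) ^ 2).
  assert (Hpt : forall i, sqmod (assemble u al w) i <= 3 * (a1 i + a2 i + a3 i)).
  { intros i. unfold sqmod, a1, a2, a3, assemble, sqmod. fold q.
    destruct (Nat.ltb_spec i q).
    - pose proof (pow2_ge_0 (Cmod (u i))). lra.
    - eapply Rle_trans. apply pow2_le_compat. apply Cmod_ge_0. apply Cmod_triangle.
      pose proof (sum3_sq_le 0 (Cmod (path_sol r (path_part w) (i - q))) (Cmod (Cmult al (Cpow r (i - q))))).
      rewrite Rplus_0_l in H0. lra. }
  eapply Rle_trans. apply psum_le. intros k _. apply Hpt.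
  rewrite psum_scal, !psum_plus. apply Rmult_le_compat_l. lra.
  pose proof (psum_restrict_le (sqmod u) q N (sqmod_nonneg u)).
  pose proof (psum_shifted_path_sol_le w q N Hw).
  pose proof (psum_shifted_geom_le al q N).
  unfold a1, a2, a3. lra.
Qed.

End Assemble.

Section PathKernel.
Variable p : nat.
Hypothesis Hp : (1 <= p)%nat.
Variables z r : C.
Hypothesis Hr0 : r <> RtoC 0.
Hypothesis Hz : Cminus (RtoC 2) z = Cplus r (Cinv r).

Lemma path_kernel_geom x : Cmod r <= 1 -> tends0 x ->
  (forall i, (p <= i)%nat -> Lz p z x i = RtoC 0) ->
  forall k, x (p - 1 + k)%nat = Cmult (Cpow r k) (x (p - 1)%nat).
Proof.
  intros Hr1 Hx HA k.
  replace (x (p - 1)%nat) with (x (p - 1 + 0)%nat) by (f_equal; lia).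
  apply (path_rec_geom r (fun k => x (p - 1 + k)%nat) Hr0 Hr1).
  - intros j. rewrite Lz_path_rec with (z := z) by (auto; apply HA; lia). rewrite Hz. ring.
  - apply tends0_shift; auto.
Qed.

Lemma path_kernel_unit x : Cmod r = 1 -> tends0 x ->
  (forall i, (p <= i)%nat -> Lz p z x i = RtoC 0) ->
  forall k, x (p - 1 + k)%nat = RtoC 0.
Proof.
  intros Hr1 Hx HA k.
  apply (path_rec_unit r (fun k => x (p - 1 + k)%nat) Hr0 Hr1).
  - intros j. rewrite Lz_path_rec with (z := z) by (auto; apply HA; lia). rewrite Hz. ring.
  - apply tends0_shift; auto.
Qed.

End PathKernel.

Section Kernel.
Variable p : nat.
Hypothesis Hp : (5 <= p)%nat.
Variables z r : C.
Hypothesis Hr0 : r <> RtoC 0.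
Hypothesis Hr1 : Cmod r <= 1.
Hypothesis Hz : Cminus (RtoC 2) z = Cplus r (Cinv r).

Definition zero_coef : C := Cminus (Cminus (RtoC (INR p + 1)) z) r.

Lemma kernel_equations x : l2 x -> (forall i, Lz p z x i = RtoC 0) ->
  (forall k, x (p - 1 + k)%nat = Cmult (Cpow r k) (x (p - 1)%nat)) /\
  csum x p = Cmult zero_coef (x (p - 1)%nat) /\
  (forall i, (i < p - 1)%nat -> Cmult (Cminus (RtoC (INR p)) z) (x i) = csum x p).
Proof.
  intros Hx HA.
  assert (Hk := path_kernel_geom p ltac:(lia) z r Hr0 Hz x Hr1 (tends0_l2 x Hx) (fun i _ => HA i)).
  split; auto. split.
  - pose proof (HA (p - 1)%nat) as Hq. rewrite Lz_eq, Lap_clique in Hq by lia.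
    destruct (Nat.eqb_spec (p - 1) (p - 1)); [|lia].
    replace (x p) with (x (p - 1 + 1)%nat) in Hq by (f_equal; lia). rewrite Hk in Hq.
    apply Ceq_minus. rewrite <- Copp_0, <- Hq. unfold zero_coef. rewrite RtoC_plus. simpl. ring.
  - intros i Hi. pose proof (HA i) as Hq. rewrite Lz_eq, Lap_clique in Hq by lia.
    destruct (Nat.eqb_spec i (p - 1)); [lia|].
    apply Ceq_minus. rewrite <- Hq. ring.
Qed.

Lemma kernel_secular x : l2 x -> (forall i, Lz p z x i = RtoC 0) -> z <> RtoC (INR p) ->
  Cmult (secular p z r) (x (p - 1)%nat) = RtoC 0.
Proof.
  intros Hx HA Hzp. destruct (kernel_equations x Hx HA) as [Hk [HT Hi]].
  set (b := x (p - 1)%nat) in *. set (T := csum x p) in *.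
  assert (Hpz : Cminus (RtoC (INR p)) z <> RtoC 0) by (intros E; apply Hzp; apply Ceq_minus in E; auto).
  assert (Hs : csum x (p - 1) = Cmult (RtoC (INR (p - 1))) (Cdiv T (Cminus (RtoC (INR p)) z))).
  { rewrite <- csum_const. apply csum_ext. intros i Hi'. rewrite <- (Hi i Hi'). field. auto. }
  assert (HT2 : T = Cplus (csum x (p - 1)) b).
  { unfold T, b. replace p with (S (p - 1)) at 1 by lia. reflexivity. }
  rewrite Hs, INR_sub1 in HT2 by lia.
  unfold secular. unfold zero_coef in HT. rewrite RtoC_minus in HT2. rewrite RtoC_plus in *.
  assert (E1 : Cmult (Cminus (RtoC (INR p)) z) T =
               Cplus (Cmult (Cminus (RtoC (INR p)) (RtoC 1)) T) (Cmult (Cminus (RtoC (INR p)) z) b)).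
  { rewrite HT2 at 1. field. auto. }
  rewrite HT in E1. apply Ceq_minus in E1. rewrite <- E1. ring.
Qed.

Lemma kernel_trivial x : l2 x -> (forall i, Lz p z x i = RtoC 0) -> z <> RtoC (INR p) ->
  x (p - 1)%nat = RtoC 0 -> x = vzero.
Proof.
  intros Hx HA Hzp Hb. destruct (kernel_equations x Hx HA) as [Hk [HT Hi]].
  rewrite Hb, Cmult_0_r in HT.
  assert (Hpz : Cminus (RtoC (INR p)) z <> RtoC 0) by (intros E; apply Hzp; apply Ceq_minus in E; auto).
  apply functional_extensionality. intros i. unfold vzero.
  destruct (Nat.lt_ge_cases i (p - 1)).
  - specialize (Hi i H). rewrite HT in Hi. apply Cmult_eq_0 in Hi. destruct Hi; auto. contradiction.
  - replace i with (p - 1 + (i - (p - 1)))%nat by lia. rewrite Hk, Hb. ring.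
Qed.

Lemma kernel_trivial_of_secular x : l2 x -> (forall i, Lz p z x i = RtoC 0) -> z <> RtoC (INR p) ->
  secular p z r <> RtoC 0 -> x = vzero.
Proof.
  intros Hx HA Hzp HD. apply kernel_trivial; auto.
  destruct (Cmult_eq_0 _ _ (kernel_secular x Hx HA Hzp)); [contradiction|auto].
Qed.

End Kernel.

Section SolvabilityFunctional.
Variable p : nat.
Variables z r : C.
Hypothesis Hr1 : Cmod r < 1.

Definition clique_sum (w : nat -> C) : C := csum w (p - 1).
Definition zero_rhs (w : nat -> C) : C := Cplus (w (p - 1)%nat) (path_sol r (path_part p w) 1).

(* Eliminating the clique values from the equations at the clique and at vertex 0 leaves
   [secular p z r * al = solv_fun w] for the coefficient [al] of [r^k] in a preimage of [w]. *)
Definition solv_fun (w : nat -> C) : C := Cplus (clique_sum w) (Cmult (Cminus (RtoC 1) z) (zero_rhs w)).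

Lemma clique_sum_linear a u v : clique_sum (vadd (vscale a u) v) = Cplus (Cmult a (clique_sum u)) (clique_sum v).
Proof. unfold clique_sum. apply csum_linear. Qed.

Lemma zero_rhs_linear a u v : l2 u -> l2 v -> zero_rhs (vadd (vscale a u) v) = Cplus (Cmult a (zero_rhs u)) (zero_rhs v).
Proof.
  intros Hu Hv. unfold zero_rhs.
  rewrite path_part_linear, path_sol_linear by (auto; apply l2_shift; auto). unfold vadd, vscale. ring.
Qed.

Lemma solv_fun_linear a u v : l2 u -> l2 v -> solv_fun (vadd (vscale a u) v) = Cplus (Cmult a (solv_fun u)) (solv_fun v).
Proof. intros. unfold solv_fun. rewrite clique_sum_linear, zero_rhs_linear by auto. ring. Qed.

Definition K_rhs : R := 1 + 2 * Cmod r / (1 - Cmod r).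
Definition K_solv : R := INR (p - 1) + Cmod (Cminus (RtoC 1) z) * K_rhs.

Lemma clique_sum_bound w : l2 w -> Cmod (clique_sum w) <= INR (p - 1) * l2norm w.
Proof. intros Hw. apply Cmod_csum_le. intros; apply Cmod_le_l2norm; auto. Qed.

Lemma zero_rhs_bound w : l2 w -> Cmod (zero_rhs w) <= K_rhs * l2norm w.
Proof.
  intros Hw. unfold zero_rhs, K_rhs. eapply Rle_trans. apply Cmod_triangle.
  pose proof (Cmod_le_l2norm w (p - 1) Hw).
  pose proof (path_sol1_bound r Hr1 (path_part p w) (l2_shift p w Hw)).
  assert (l2norm (path_part p w) <= l2norm w).
  { unfold l2norm. apply sqrt_le_1_alt. apply l2sq_shift_le; auto. }
  pose proof (Cmod_r_bounds r Hr1).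
  assert (0 <= 2 * Cmod r / (1 - Cmod r)) by (apply Rmult_le_pos; [lra|apply Rlt_le, Rinv_0_lt_compat; lra]).
  assert (2 * Cmod r / (1 - Cmod r) * l2norm (path_part p w) <= 2 * Cmod r / (1 - Cmod r) * l2norm w)
    by (apply Rmult_le_compat_l; auto).
  lra.
Qed.

Lemma solv_fun_bound w : l2 w -> Cmod (solv_fun w) <= K_solv * l2norm w.
Proof.
  intros Hw. unfold solv_fun, K_solv. eapply Rle_trans. apply Cmod_triangle. rewrite Cmod_mult.
  pose proof (clique_sum_bound w Hw). pose proof (zero_rhs_bound w Hw).
  pose proof (Cmod_ge_0 (Cminus (RtoC 1) z)).
  assert (Cmod (Cminus (RtoC 1) z) * Cmod (zero_rhs w) <= Cmod (Cminus (RtoC 1) z) * (K_rhs * l2norm w))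
    by (apply Rmult_le_compat_l; auto).
  nra.
Qed.

End SolvabilityFunctional.

Section Resolvent.
Variable p : nat.
Hypothesis Hp : (5 <= p)%nat.
Variables z r : C.
Hypothesis Hr0 : r <> RtoC 0.
Hypothesis Hr1 : Cmod r < 1.
Hypothesis Hz : Cminus (RtoC 2) z = Cplus r (Cinv r).
Hypothesis Hzp : z <> RtoC (INR p).
Hypothesis HD : secular p z r <> RtoC 0.

Lemma p_minus_z_neq0 : Cminus (RtoC (INR p)) z <> RtoC 0.
Proof. intros E; apply Hzp; apply Ceq_minus in E; auto. Qed.

Definition res_alpha (w : nat -> C) : C := Cdiv (solv_fun p z r w) (secular p z r).
Definition res_total (w : nat -> C) : C := Cminus (Cmult (zero_coef p z r) (res_alpha w)) (zero_rhs p r w).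
Definition res_clique (w : nat -> C) (i : nat) : C := Cdiv (Cplus (w i) (res_total w)) (Cminus (RtoC (INR p)) z).
Definition res_op (w : nat -> C) : nat -> C := assemble p r (res_clique w) (res_alpha w) w.

Lemma res_clique_total w : Cplus (csum (res_clique w) (p - 1)) (res_alpha w) = res_total w.
Proof.
  pose proof p_minus_z_neq0 as Hpz.
  assert (E : csum (res_clique w) (p - 1) = Cdiv (Cplus (clique_sum p w) (Cmult (RtoC (INR (p - 1))) (res_total w))) (Cminus (RtoC (INR p)) z)).
  { unfold res_clique.
    rewrite (csum_ext _ (fun i => Cmult (Cinv (Cminus (RtoC (INR p)) z)) (Cplus (w i) (res_total w)))).
    rewrite csum_scal, csum_plus, csum_const. unfold clique_sum, Cdiv. ring.
    intros; unfold Cdiv; ring. }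
  rewrite E. rewrite INR_sub1 by lia. rewrite RtoC_minus.
  unfold res_total, res_alpha, solv_fun, zero_coef. unfold secular in *. rewrite RtoC_plus in *.
  field. split; auto.
Qed.

Lemma Lz_res_op w : l2 w -> forall i, Lz p z (res_op w) i = w i.
Proof.
  intros Hw i. unfold res_op.
  destruct (Nat.lt_ge_cases i (p - 1)).
  - rewrite Lz_assemble_clique by auto. rewrite res_clique_total. unfold res_clique. field. apply p_minus_z_neq0.
  - destruct (Nat.eq_dec i (p - 1)).
    + subst i. rewrite Lz_assemble_zero by auto. rewrite res_clique_total.
      unfold res_total. unfold zero_rhs at 1. unfold zero_coef. rewrite RtoC_plus. ring.
    + apply Lz_assemble_path; auto. lia.
Qed.

Lemma res_alpha_linear a u v : l2 u -> l2 v -> res_alpha (vadd (vscale a u) v) = Cplus (Cmult a (res_alpha u)) (res_alpha v).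
Proof. intros. unfold res_alpha. rewrite solv_fun_linear by auto. field. auto. Qed.

Lemma res_total_linear a u v : l2 u -> l2 v -> res_total (vadd (vscale a u) v) = Cplus (Cmult a (res_total u)) (res_total v).
Proof. intros. unfold res_total. rewrite res_alpha_linear, zero_rhs_linear by auto. ring. Qed.

Lemma res_op_linear a u v : l2 u -> l2 v -> res_op (vadd (vscale a u) v) = vadd (vscale a (res_op u)) (res_op v).
Proof.
  intros Hu Hv. apply functional_extensionality. intros i.
  change (vadd (vscale a (res_op u)) (res_op v) i) with (Cplus (Cmult a (res_op u i)) (res_op v i)).
  unfold res_op, assemble. destruct (Nat.ltb i (p - 1)).
  - unfold res_clique. rewrite res_total_linear by auto.
    change (vadd (vscale a u) v i) with (Cplus (Cmult a (u i)) (v i)). field. apply p_minus_z_neq0.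
  - rewrite path_part_linear, path_sol_linear, res_alpha_linear by (auto; apply l2_shift; auto). ring.
Qed.

Definition K_alpha : R := K_solv p z r / Cmod (secular p z r).
Definition K_total : R := Cmod (zero_coef p z r) * K_alpha + K_rhs r.
Definition K_clique : R := (1 + K_total) / Cmod (Cminus (RtoC (INR p)) z).

Lemma res_alpha_bound w : l2 w -> Cmod (res_alpha w) <= K_alpha * l2norm w.
Proof.
  intros Hw. unfold res_alpha, K_alpha. rewrite Cmod_div by auto.
  assert (0 < Cmod (secular p z r)) by (apply Cmod_gt_0; auto).
  apply Rle_trans with (K_solv p z r * l2norm w * / Cmod (secular p z r)).
  - apply Rmult_le_compat_r. apply Rlt_le, Rinv_0_lt_compat; auto. apply solv_fun_bound; auto.
  - right. unfold Rdiv. ring.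
Qed.

Lemma res_total_bound w : l2 w -> Cmod (res_total w) <= K_total * l2norm w.
Proof.
  intros Hw. unfold res_total, K_total. eapply Rle_trans. apply Cmod_minus_le. rewrite Cmod_mult.
  pose proof (res_alpha_bound w Hw). pose proof (zero_rhs_bound p r Hr1 w Hw).
  pose proof (Cmod_ge_0 (zero_coef p z r)).
  assert (Cmod (zero_coef p z r) * Cmod (res_alpha w) <= Cmod (zero_coef p z r) * (K_alpha * l2norm w)) by (apply Rmult_le_compat_l; auto).
  nra.
Qed.

Lemma res_clique_bound w i : l2 w -> Cmod (res_clique w i) <= K_clique * l2norm w.
Proof.
  intros Hw. unfold res_clique, K_clique. rewrite Cmod_div by apply p_minus_z_neq0.
  assert (0 < Cmod (Cminus (RtoC (INR p)) z)) by (apply Cmod_gt_0; apply p_minus_z_neq0).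
  apply Rle_trans with ((1 + K_total) * l2norm w * / Cmod (Cminus (RtoC (INR p)) z)).
  2: { right. unfold Rdiv. ring. }
  apply Rmult_le_compat_r. apply Rlt_le, Rinv_0_lt_compat; auto.
  eapply Rle_trans. apply Cmod_triangle. pose proof (Cmod_le_l2norm w i Hw). pose proof (res_total_bound w Hw). lra.
Qed.

Definition K_res : R := 3 * (INR (p - 1) * K_clique ^ 2 + K_path r + K_alpha ^ 2 / (1 - Cmod r ^ 2)).

Lemma res_op_l2sq w : l2 w -> l2 (res_op w) /\ l2sq (res_op w) <= K_res * l2sq w.
Proof.
  intros Hw. destruct (assemble_l2 p Hp r Hr1 (res_clique w) (res_alpha w) w Hw) as [Hl HS]. split; auto.
  eapply Rle_trans. exact HS. unfold K_res.
  assert (HB : l2norm w ^ 2 = l2sq w) by (unfold l2norm; rewrite pow2_sqrt; auto; apply l2sq_nonneg; auto).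
  assert (H0 : 0 <= l2norm w) by apply sqrt_pos.
  assert (H1 : psum (sqmod (res_clique w)) (p - 1) <= INR (p - 1) * K_clique ^ 2 * l2sq w).
  { eapply Rle_trans. apply psum_le with (b := fun _ => K_clique ^ 2 * l2sq w).
    intros k _. unfold sqmod. rewrite <- HB, <- Rpow_mult_distr. apply pow2_le_compat. apply Cmod_ge_0.
    apply res_clique_bound; auto.
    rewrite psum_const. right. ring. }
  assert (H2 : Cmod (res_alpha w) ^ 2 <= K_alpha ^ 2 * l2sq w).
  { rewrite <- HB, <- Rpow_mult_distr. apply pow2_le_compat. apply Cmod_ge_0. apply res_alpha_bound; auto. }
  pose proof (Cmod_r_bounds r Hr1).
  assert (H3 : 0 < 1 - Cmod r ^ 2) by nra.
  assert (Cmod (res_alpha w) ^ 2 / (1 - Cmod r ^ 2) <= K_alpha ^ 2 * l2sq w / (1 - Cmod r ^ 2)).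
  { unfold Rdiv. apply Rmult_le_compat_r; auto. apply Rlt_le, Rinv_0_lt_compat; auto. }
  replace (K_alpha ^ 2 * l2sq w / (1 - Cmod r ^ 2)) with (K_alpha ^ 2 / (1 - Cmod r ^ 2) * l2sq w) in H by (field; lra).
  nra.
Qed.

Lemma K_res_nonneg : 0 <= K_res.
Proof.
  pose proof (Cmod_r_bounds r Hr1). pose proof (K_path_nonneg r Hr1). unfold K_res.
  assert (0 <= INR (p - 1) * K_clique ^ 2) by (apply Rmult_le_pos; [apply pos_INR|apply pow2_ge_0]).
  assert (0 <= K_alpha ^ 2 / (1 - Cmod r ^ 2)).
  { apply Rmult_le_pos. apply pow2_ge_0. apply Rlt_le, Rinv_0_lt_compat. nra. }
  lra.
Qed.

Lemma res_op_bounded : bounded_op res_op.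
Proof.
  assert (H : forall v, l2 v -> forall N, psum (sqmod (res_op v)) N <= K_res * l2sq v).
  { intros v Hv N. destruct (res_op_l2sq v Hv). eapply Rle_trans; [|exact H0]. apply psum_le_l2sq; auto. }
  destruct (bounded_of_psum_bound res_op K_res K_res_nonneg H) as [H1 H2]. split; auto. split; auto.
  intros. apply res_op_linear; auto.
Qed.

Lemma resolvent_exists : has_bounded_inverse (Lz p z).
Proof.
  exists res_op. split; [apply res_op_bounded|]. split.
  - intros v Hv. set (x := vsub (res_op (Lz p z v)) v).
    assert (Hx : l2 x). { apply l2_sub; auto. apply res_op_l2sq. apply Lz_l2; auto. lia. }
    assert (HA : forall i, Lz p z x i = RtoC 0).
    { intros i. unfold x. rewrite Lz_sub, Lz_res_op. ring. apply Lz_l2; auto. lia. }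
    pose proof (kernel_trivial_of_secular p Hp z r Hr0 ltac:(lra) Hz x Hx HA Hzp HD) as H0.
    apply functional_extensionality. intros i. apply (f_equal (fun f => f i)) in H0.
    unfold x, vsub, vzero in H0. apply Ceq_minus in H0. auto.
  - intros v Hv. apply functional_extensionality. intros i. apply Lz_res_op; auto.
Qed.

End Resolvent.

(** * Eigenvectors and the point spectrum *)

Definition eig_p (i : nat) : C :=
  Cminus (if Nat.eqb i 0 then RtoC 1 else RtoC 0) (if Nat.eqb i 1 then RtoC 1 else RtoC 0).

Lemma eig_p_l2 : l2 eig_p.
Proof.
  apply (l2_finite _ 2). intros i Hi. unfold eig_p.
  destruct (Nat.eqb_spec i 0); [lia|]. destruct (Nat.eqb_spec i 1); [lia|]. ring.
Qed.

Lemma eig_p_neq0 : eig_p <> vzero.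
Proof.
  intros E. apply (f_equal (fun f => f O)) in E. unfold eig_p, vzero in E. simpl in E.
  injection E. lra.
Qed.

Lemma csum_eig_p n : (2 <= n)%nat -> csum eig_p n = RtoC 0.
Proof.
  intros Hn. unfold eig_p. rewrite csum_minus.
  rewrite (csum_delta (fun _ => RtoC 1) 0 n), (csum_delta (fun _ => RtoC 1) 1 n).
  destruct (Nat.ltb_spec 0 n); [|lia]. destruct (Nat.ltb_spec 1 n); [|lia]. ring.
Qed.

Lemma eig_p_eigen p : (5 <= p)%nat -> forall i, Lz p (RtoC (INR p)) eig_p i = RtoC 0.
Proof.
  intros Hp i. rewrite Lz_eq. destruct (Nat.lt_ge_cases i p).
  - rewrite Lap_clique by lia. rewrite csum_eig_p by lia.
    destruct (Nat.eqb_spec i (p - 1)).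
    + subst i. unfold eig_p. destruct (Nat.eqb_spec (p-1) 0); [lia|]. destruct (Nat.eqb_spec (p-1) 1); [lia|].
      destruct (Nat.eqb_spec p 0); [lia|]. destruct (Nat.eqb_spec p 1); [lia|]. ring.
    + ring.
  - rewrite Lap_path by lia. unfold eig_p.
    destruct (Nat.eqb_spec i 0); [lia|]. destruct (Nat.eqb_spec i 1); [lia|].
    destruct (Nat.eqb_spec (i-1) 0); [lia|]. destruct (Nat.eqb_spec (i-1) 1); [lia|].
    destruct (Nat.eqb_spec (S i) 0); [lia|]. destruct (Nat.eqb_spec (S i) 1); [lia|]. ring.
Qed.

Section EigenStar.
Variable p : nat.
Hypothesis Hp : (5 <= p)%nat.

Definition z_star : C := RtoC (lam_star p).
Definition r_star : C := RtoC (r_minus p).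

Lemma r_star_neq0 : r_star <> RtoC 0.
Proof. unfold r_star. intros E. injection E. apply r_minus_neq0; auto. Qed.

Lemma r_star_lt1 : Cmod r_star < 1.
Proof. unfold r_star. rewrite Cmod_R. pose proof (r_minus_bounds p Hp). pose proof (r_minus_gt_m1 p Hp). rewrite Rabs_left; lra. Qed.

Lemma r_star_root : Cminus (RtoC 2) z_star = Cplus r_star (Cinv r_star).
Proof.
  unfold z_star, r_star. rewrite <- RtoC_inv by (apply r_minus_neq0; auto). rewrite <- RtoC_minus, <- RtoC_plus.
  f_equal. apply lam_star_path_root; auto.
Qed.

Lemma z_star_neq_p : z_star <> RtoC (INR p).
Proof. unfold z_star. intros E. injection E. pose proof (lam_star_bounds p Hp). lra. Qed.

Lemma p_minus_z_star_neq0 : Cminus (RtoC (INR p)) z_star <> RtoC 0.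
Proof. intros E. apply z_star_neq_p. apply Ceq_minus in E. auto. Qed.

Lemma secular_star : secular p z_star r_star = RtoC 0.
Proof. apply secular_lam_star; auto. Qed.

Definition kappa : C := Cdiv (zero_coef p z_star r_star) (Cminus (RtoC (INR p)) z_star).
Definition eig_star : nat -> C := assemble p r_star (fun _ => kappa) (RtoC 1) vzero.

Lemma path_sol_vzero r k : path_sol r (path_part p vzero) k = RtoC 0.
Proof.
  induction k; simpl. auto. rewrite IHk.
  assert (geom_tail r (path_part p vzero) k = RtoC 0).
  { unfold geom_tail. rewrite (CSeries_ext _ (fun _ => RtoC 0)). apply CSeries_zero. intros.
    unfold path_part, vzero. ring. }
  rewrite H. ring.
Qed.

Lemma eig_star_l2 : l2 eig_star.
Proof. apply (assemble_l2 p Hp r_star r_star_lt1). apply l2_vzero. Qed.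

Lemma eig_star_zero : eig_star (p - 1)%nat = RtoC 1.
Proof.
  unfold eig_star. replace (p - 1)%nat with (p - 1 + 0)%nat by lia. rewrite assemble_path.
  rewrite path_sol_vzero. simpl. ring. auto.
Qed.

Lemma eig_star_neq0 : eig_star <> vzero.
Proof.
  intros E. pose proof eig_star_zero. rewrite E in H. unfold vzero in H. injection H. lra.
Qed.

Lemma eig_star_eigen : forall i, Lz p z_star eig_star i = RtoC 0.
Proof.
  pose proof p_minus_z_star_neq0.
  pose proof secular_star as HD. unfold secular in HD.
  assert (E : Cminus (Cminus (zero_coef p z_star r_star) (Cmult (RtoC (INR (p - 1))) kappa)) (RtoC 1) = RtoC 0).
  { rewrite INR_sub1 by lia. rewrite RtoC_minus. unfold kappa, zero_coef. rewrite RtoC_plus in *.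
    transitivity (Cdiv (Cminus (Cmult (Cminus (RtoC 1) z_star) (Cminus (Cminus (Cplus (RtoC (INR p)) (RtoC 1)) z_star) r_star))
          (Cminus (RtoC (INR p)) z_star)) (Cminus (RtoC (INR p)) z_star)).
    field. auto. rewrite HD. field. auto. }
  intros i. unfold eig_star. destruct (Nat.lt_ge_cases i (p - 1)).
  - rewrite Lz_assemble_clique by auto. rewrite csum_const. rewrite <- E at 1. unfold kappa. field. auto.
  - destruct (Nat.eq_dec i (p - 1)).
    + subst i. rewrite Lz_assemble_zero by auto. rewrite path_sol_vzero, csum_const.
      match goal with |- ?X = _ => transitivity (Cminus (Cminus (zero_coef p z_star r_star) (Cmult (RtoC (INR (p - 1))) kappa)) (RtoC 1)) end.
      unfold zero_coef. rewrite !RtoC_plus. ring. exact E.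
    + rewrite Lz_assemble_path; auto. apply r_star_neq0. apply r_star_lt1. apply r_star_root. lia. apply l2_vzero.
Qed.

End EigenStar.

Lemma point_spectrum_char p z : (5 <= p)%nat ->
  (point_spectrum (Lap p) z <-> (z = RtoC (lam_star p) \/ z = RtoC (INR p))).
Proof.
  intros Hp. split.
  - intros [v [Hv [Hn He]]]. pose proof (Lz_eigen p z v He) as HA.
    destruct (Ceq_dec z (RtoC (INR p))) as [Ep|Ep]; [right; auto|left].
    destruct (path_root_exists z) as [r [Hr0 [Hr1 Hz]]].
    destruct (Req_dec (Cmod r) 1) as [E1|E1].
    + exfalso. apply Hn. apply (kernel_trivial p Hp z r Hr0 Hr1 Hz v Hv HA Ep).
      rewrite <- (Nat.add_0_r (p - 1)).
      exact (path_kernel_unit p ltac:(lia) z r Hr0 Hz v E1 (tends0_l2 v Hv) (fun i _ => HA i) 0).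
    + destruct (Ceq_dec (secular p z r) (RtoC 0)) as [HD|HD].
      * apply (secular_eq0_inv p Hp z r Hr0 ltac:(lra) Hz HD).
      * exfalso. apply Hn. apply (kernel_trivial_of_secular p Hp z r Hr0 Hr1 Hz v Hv HA Ep HD).
  - intros [E|E].
    + exists (eig_star p). split. apply eig_star_l2; auto. split. apply eig_star_neq0; auto.
      subst z. apply eigen_of_Lz. apply eig_star_eigen; auto.
    + exists eig_p. split. apply eig_p_l2. split. apply eig_p_neq0. subst z. apply eigen_of_Lz.
      apply eig_p_eigen; auto.
Qed.

(** * The interval [0, 4] *)

Lemma ln_succ_sub_le (x : R) : 0 < x -> ln (x + 1) - ln x <= / x.
Proof.
  intros Hx. rewrite <- ln_div by lra.
  replace ((x + 1) / x) with (1 + / x) by (field; lra).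
  rewrite <- (ln_exp (/ x)) at 2. apply ln_le. pose proof (Rinv_0_lt_compat x Hx). lra.
  apply exp_ineq1_le.
Qed.

Lemma harmonic_tail_divergent (m : nat) : (1 <= m)%nat -> ~ ex_series (fun k => / INR (m + k)).
Proof.
  intros Hm Hex.
  assert (Hpos : forall k, 0 <= / INR (m + k)).
  { intros k. apply Rlt_le, Rinv_0_lt_compat. apply lt_0_INR. lia. }
  assert (Hlow : forall N, ln (INR (m + N)) - ln (INR m) <= psum (fun k => / INR (m + k)) N).
  { induction N. rewrite Nat.add_0_r. simpl. lra.
    simpl psum. replace (m + S N)%nat with (S (m + N)) by lia. rewrite S_INR.
    pose proof (ln_succ_sub_le (INR (m + N)) ltac:(apply lt_0_INR; lia)). lra. }
  set (M := Series (fun k => / INR (m + k))).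
  assert (HM : forall N, psum (fun k => / INR (m + k)) N <= M) by (intros; apply psum_le_Series; auto).
  destruct (INR_archimed 1 (exp (M + 1 + ln (INR m)))) as [N HN]. lra.
  specialize (Hlow N). specialize (HM N).
  assert (exp (M + 1 + ln (INR m)) < INR (m + N)).
  { rewrite plus_INR. pose proof (pos_INR m). lra. }
  apply ln_increasing in H. rewrite ln_exp in H. lra. apply exp_pos.
Qed.

Lemma is_lim_seq_inv_INR : is_lim_seq (fun n => / INR n) 0.
Proof.
  replace (Finite 0) with (Rbar_inv p_infty) by reflexivity.
  apply is_lim_seq_inv. apply is_lim_seq_INR. discriminate.
Qed.

Definition inv_sqrt (i : nat) : R := / sqrt (INR i).

Lemma inv_sqrt_pos i : (1 <= i)%nat -> 0 < inv_sqrt i.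
Proof. intros. unfold inv_sqrt. apply Rinv_0_lt_compat, sqrt_lt_R0, lt_0_INR. lia. Qed.

Lemma inv_sqrt_sq i : (1 <= i)%nat -> inv_sqrt i ^ 2 = / INR i.
Proof.
  intros Hi. unfold inv_sqrt. rewrite pow_inv. f_equal. rewrite pow2_sqrt. auto. apply pos_INR.
Qed.

Lemma inv_sqrt_diff n : (1 <= n)%nat -> 0 <= inv_sqrt n - inv_sqrt (S n) <= / INR n.
Proof.
  intros Hn. unfold inv_sqrt. rewrite S_INR.
  set (x := INR n). assert (Hx : 1 <= x) by (unfold x; replace 1 with (INR 1) by reflexivity; apply le_INR; auto).
  set (a := sqrt x). set (b := sqrt (x + 1)).
  assert (Ha : a * a = x) by (apply sqrt_sqrt; lra). assert (Hb : b * b = x + 1) by (apply sqrt_sqrt; lra).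
  assert (Ha0 : 0 < a) by (apply sqrt_lt_R0; lra). assert (Hb0 : 0 < b) by (apply sqrt_lt_R0; lra).
  assert (Hab : a <= b) by (apply sqrt_le_1_alt; lra).
  assert (Hb1 : b <= a + 1) by nra.
  replace (/ a - / b) with ((b - a) / (a * b)) by (field; lra).
  split. apply Rmult_le_pos. lra. apply Rlt_le, Rinv_0_lt_compat. nra.
  apply Rle_trans with (/ (a * b)).
  unfold Rdiv; rewrite <- (Rmult_1_l (/ (a * b))) at 2; apply Rmult_le_compat_r; [apply Rlt_le, Rinv_0_lt_compat; nra | lra].
  apply Rinv_le_contravar; nra.
Qed.

Lemma is_lim_seq_inv_sqrt : is_lim_seq inv_sqrt 0.
Proof.
  apply is_lim_seq_ext with (fun n => sqrt (/ INR n)). intros; unfold inv_sqrt; apply sqrt_inv.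
  apply is_lim_seq_sqrt0. intros n. destruct n. simpl. rewrite Rinv_0. lra.
  apply Rlt_le, Rinv_0_lt_compat, lt_0_INR. lia. apply is_lim_seq_inv_INR.
Qed.

Lemma tends0_sqmod v : tends0 v -> is_lim_seq (sqmod v) 0.
Proof.
  intros H. apply is_lim_seq_ext with (fun n => Cmod (v n) * Cmod (v n)).
  intros n. unfold sqmod. ring. replace (Finite 0) with (Finite (0 * 0)) by (f_equal; ring).
  apply is_lim_seq_mult'; auto.
Qed.

(* For [z] in [0,4] the path root [r] is unimodular, and [v_i = r^i / sqrt i] (on the path) is
   a Weyl sequence: [v] is not square summable, while [(L - z) v] is, its entries being O(1/i).
   Truncations of [v] have images converging to [(L - z) v], which is not in the range. *)
Section Interval.
Variable p : nat.
Hypothesis Hp : (5 <= p)%nat.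
Variables z r : C.
Hypothesis Hr0 : r <> RtoC 0.
Hypothesis Hr1 : Cmod r = 1.
Hypothesis Hz : Cminus (RtoC 2) z = Cplus r (Cinv r).

Definition weyl (i : nat) : C := if Nat.ltb i p then RtoC 0 else Cmult (Cpow r i) (RtoC (inv_sqrt i)).
Definition weyl_img : nat -> C := Lz p z weyl.

Lemma weyl_path i : (p <= i)%nat -> weyl i = Cmult (Cpow r i) (RtoC (inv_sqrt i)).
Proof. intros. unfold weyl. destruct (Nat.ltb_spec i p); [lia|auto]. Qed.

Lemma Cmod_weyl i : (p <= i)%nat -> Cmod (weyl i) = inv_sqrt i.
Proof.
  intros Hi. rewrite weyl_path, Cmod_mult, Cmod_pow, Hr1, pow1, Cmod_R by auto.
  rewrite Rabs_pos_eq. ring. apply Rlt_le, inv_sqrt_pos. lia.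
Qed.

Lemma inv_sqrt_nonneg i : 0 <= inv_sqrt i.
Proof. unfold inv_sqrt. destruct i. simpl. rewrite sqrt_0, Rinv_0. lra. apply Rlt_le, inv_sqrt_pos. lia. Qed.

Lemma weyl_tends0 : tends0 weyl.
Proof.
  apply tends0_le with inv_sqrt. intros i. destruct (Nat.lt_ge_cases i p).
  unfold weyl. destruct (Nat.ltb_spec i p); [|lia]. rewrite Cmod_0. apply inv_sqrt_nonneg.
  rewrite Cmod_weyl by auto. lra. apply is_lim_seq_inv_sqrt.
Qed.

Lemma Cmod_weyl_img_le j : (p <= j)%nat -> Cmod (weyl_img (S j)) <= 2 / INR j.
Proof.
  intros Hj. unfold weyl_img. rewrite Lz_eq, Lap_path by lia. replace (S j - 1)%nat with j by lia.
  rewrite !weyl_path by lia.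
  assert (E : Cminus (Cminus (Cminus (Cmult (RtoC 2) (Cmult (Cpow r (S j)) (RtoC (inv_sqrt (S j)))))
                 (Cmult (Cpow r j) (RtoC (inv_sqrt j)))) (Cmult (Cpow r (S (S j))) (RtoC (inv_sqrt (S (S j))))))
                 (Cmult z (Cmult (Cpow r (S j)) (RtoC (inv_sqrt (S j)))))
            = Cmult (Cpow r j) (Cplus (Cmult (Cmult r r) (RtoC (inv_sqrt (S j) - inv_sqrt (S (S j)))))
                                      (RtoC (inv_sqrt (S j) - inv_sqrt j)))).
  { rewrite (z_of_path_root z r Hz). rewrite !RtoC_minus. simpl Cpow. field. auto. }
  rewrite E. rewrite Cmod_mult, Cmod_pow, Hr1, pow1, Rmult_1_l.
  eapply Rle_trans. apply Cmod_triangle. rewrite Cmod_mult, Cmod_mult, Hr1, !Cmod_R.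
  pose proof (inv_sqrt_diff (S j) ltac:(lia)). pose proof (inv_sqrt_diff j ltac:(lia)).
  rewrite Rabs_pos_eq by lra. rewrite Rabs_left1 by lra.
  assert (/ INR (S j) <= / INR j). { apply Rinv_le_contravar. apply lt_0_INR; lia. apply le_INR; lia. }
  unfold Rdiv. lra.
Qed.

Lemma sqmod_weyl_img_le i : (p + 1 <= i)%nat -> sqmod weyl_img i <= 8 * (/ INR (i - 1) - / INR i).
Proof.
  intros Hi. destruct i as [|j]. lia. replace (S j - 1)%nat with j by lia.
  unfold sqmod. assert (Hj : 1 <= INR j) by (replace 1 with (INR 1) by reflexivity; apply le_INR; lia).
  eapply Rle_trans. apply pow2_le_compat. apply Cmod_ge_0. apply Cmod_weyl_img_le. lia.
  rewrite S_INR. replace (/ INR j - / (INR j + 1)) with (/ (INR j * (INR j + 1))) by (field; lra).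
  unfold Rdiv. rewrite Rpow_mult_distr, pow_inv.
  assert (/ (INR j ^ 2) <= 2 * / (INR j * (INR j + 1))).
  { rewrite <- (Rmult_1_l (/ (INR j ^ 2))). replace 2 with (2 * 1) by ring.
    apply Rmult_le_reg_r with (INR j ^ 2 * (INR j * (INR j + 1))). nra.
    field_simplify; try nra. }
  nra.
Qed.

Lemma weyl_img_l2 : l2 weyl_img.
Proof.
  assert (Hind : forall N, psum (sqmod weyl_img) (p + 1 + N) <= psum (sqmod weyl_img) (p + 1) + 8 * (/ INR p - / INR (p + N))).
  { induction N. rewrite !Nat.add_0_r. lra.
    replace (p + 1 + S N)%nat with (S (p + 1 + N)) by lia. simpl psum.
    pose proof (sqmod_weyl_img_le (p + 1 + N) ltac:(lia)). replace (p + 1 + N - 1)%nat with (p + N)%nat in H by lia.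
    replace (p + S N)%nat with (p + 1 + N)%nat by lia. lra. }
  apply (l2_of_psum_bound _ (psum (sqmod weyl_img) (p + 1) + 8 * / INR p)). intros N.
  eapply Rle_trans. apply (psum_mono (sqmod weyl_img) N (p + 1 + N)). apply sqmod_nonneg. lia.
  eapply Rle_trans. apply Hind. assert (0 < / INR (p + N)) by (apply Rinv_0_lt_compat, lt_0_INR; lia). lra.
Qed.

Lemma weyl_tail_not_l2 : ~ ex_series (fun k => sqmod weyl (p + k)).
Proof.
  intros H. apply (harmonic_tail_divergent p ltac:(lia)). eapply ex_series_ext; [|exact H].
  intros k. simpl. unfold sqmod. rewrite Cmod_weyl by lia. apply inv_sqrt_sq. lia.
Qed.

Lemma weyl_img_not_in_range x : l2 x -> weyl_img = Lz p z x -> False.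
Proof.
  intros Hx E. set (y := vsub weyl x).
  assert (Hy : tends0 y) by (apply tends0_sub; [apply weyl_tends0|apply tends0_l2; auto]).
  assert (HA : forall i, (p <= i)%nat -> Lz p z y i = RtoC 0).
  { intros i _. unfold y. rewrite Lz_sub. fold weyl_img. rewrite <- E. ring. }
  pose proof (path_kernel_unit p ltac:(lia) z r Hr0 Hz y Hr1 Hy HA) as H0.
  apply weyl_tail_not_l2. unfold l2 in Hx. apply (ex_series_incr_n _ p) in Hx.
  eapply ex_series_ext; [|exact Hx]. intros k.
  specialize (H0 (S k)). unfold y, vsub in H0. replace (p - 1 + S k)%nat with (p + k)%nat in H0 by lia.
  apply Ceq_minus in H0. cbv beta. unfold sqmod. rewrite H0. reflexivity.
Qed.

Definition trunc_err (K i : nat) : R :=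
  (if Nat.eqb i (K - 1) then sqmod weyl K else 0) +
  (if Nat.eqb i K then 2 * sqmod weyl_img K + 2 * sqmod weyl (K - 1) else 0) +
  (if Nat.leb (S K) i then sqmod weyl_img i else 0).

Lemma trunc_err_nonneg K i : 0 <= trunc_err K i.
Proof.
  unfold trunc_err. pose proof (sqmod_nonneg weyl K). pose proof (sqmod_nonneg weyl_img K).
  pose proof (sqmod_nonneg weyl (K-1)).
  pose proof (sqmod_nonneg weyl_img i).
  destruct (Nat.eqb i (K-1)); destruct (Nat.eqb i K); destruct (Nat.leb (S K) i); lra.
Qed.

Lemma sqmod_trunc_err_le K i : (p + 2 <= K)%nat ->
  sqmod (fun i => Cminus (Lz p z (truncate K weyl) i) (weyl_img i)) i <= trunc_err K i.
Proof.
  intros HK. unfold sqmod at 1. unfold weyl_img. rewrite <- Lz_sub.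
  set (e := vsub (truncate K weyl) weyl).
  assert (He : forall j, e j = if Nat.ltb j K then RtoC 0 else Copp (weyl j)).
  { intros j. unfold e, vsub, truncate. destruct (Nat.ltb j K); ring. }
  pose proof (trunc_err_nonneg K i) as Hb.
  destruct (Nat.lt_ge_cases i p).
  - rewrite Lz_eq, Lap_clique by lia.
    rewrite (csum_ext _ (fun _ => RtoC 0)) by (intros j Hj; rewrite He; destruct (Nat.ltb_spec j K); [auto|lia]).
    rewrite csum_zero. rewrite !He.
    destruct (Nat.ltb_spec i K); [|lia]. destruct (Nat.ltb_spec p K); [|lia].
    replace (Cminus (Cplus (Cminus (Cmult (RtoC (INR p)) (RtoC 0)) (RtoC 0))
       (if Nat.eqb i (p - 1) then Cminus (RtoC 0) (RtoC 0) else RtoC 0)) (Cmult z (RtoC 0))) with (RtoC 0)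
       by (destruct (Nat.eqb i (p-1)); ring).
    rewrite Cmod_0. replace (0 ^ 2) with 0 by ring. auto.
  - rewrite Lz_eq, Lap_path by lia. rewrite !He. unfold trunc_err.
    destruct (Nat.ltb_spec i K); destruct (Nat.ltb_spec (i - 1) K); destruct (Nat.ltb_spec (S i) K);
    destruct (Nat.eqb_spec i (K - 1)); destruct (Nat.eqb_spec i K); destruct (Nat.leb_spec (S K) i); try lia.
    + replace (Cminus (Cminus (Cminus (Cmult (RtoC 2) (RtoC 0)) (RtoC 0)) (RtoC 0)) (Cmult z (RtoC 0))) with (RtoC 0) by ring.
      rewrite Cmod_0. replace (0 ^ 2) with 0 by ring. lra.
    + replace (S i) with K by lia.
      replace (Cminus (Cminus (Cminus (Cmult (RtoC 2) (RtoC 0)) (RtoC 0)) (Copp (weyl K))) (Cmult z (RtoC 0))) with (weyl K) by ring.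
      pose proof (sqmod_nonneg weyl_img K). pose proof (sqmod_nonneg weyl (K-1)). unfold sqmod. lra.
    + subst i.
      replace (Cminus (Cminus (Cminus (Cmult (RtoC 2) (Copp (weyl K))) (RtoC 0)) (Copp (weyl (S K)))) (Cmult z (Copp (weyl K))))
        with (Copp (Cplus (Lz p z weyl K) (weyl (K - 1)%nat))).
      2: { rewrite Lz_eq, Lap_path by lia. ring. }
      rewrite Cmod_opp. eapply Rle_trans. apply Cmod_plus_sq_le. fold (sqmod (Lz p z weyl) K). fold weyl_img.
      unfold sqmod. lra.
    + replace (Cminus (Cminus (Cminus (Cmult (RtoC 2) (Copp (weyl i))) (Copp (weyl (i - 1)%nat))) (Copp (weyl (S i)))) (Cmult z (Copp (weyl i))))
        with (Copp (Lz p z weyl i)) by (rewrite Lz_eq, Lap_path by lia; ring).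
      rewrite Cmod_opp. fold weyl_img. unfold sqmod. lra.
Qed.

Definition trunc_err_total (K : nat) : R :=
  sqmod weyl K + (2 * sqmod weyl_img K + 2 * sqmod weyl (K - 1)%nat)
  + (l2sq weyl_img - psum (sqmod weyl_img) (S K)).

Lemma trunc_err_total_nonneg K : 0 <= trunc_err_total K.
Proof.
  unfold trunc_err_total.
  pose proof (sqmod_nonneg weyl K). pose proof (sqmod_nonneg weyl_img K).
  pose proof (sqmod_nonneg weyl (K - 1)%nat).
  pose proof (psum_le_l2sq weyl_img (S K) weyl_img_l2). lra.
Qed.

Lemma l2sq_trunc_diff_le K : (p + 2 <= K)%nat ->
  l2 (vsub (Lz p z (truncate K weyl)) weyl_img) /\
  l2sq (vsub (Lz p z (truncate K weyl)) weyl_img) <= trunc_err_total K.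
Proof.
  intros HK. apply l2_of_psum_bound. intros N.
  eapply Rle_trans. apply psum_le. intros i _. apply (sqmod_trunc_err_le K i HK).
  unfold trunc_err. rewrite !psum_plus.
  pose proof (psum_delta_le (sqmod weyl K) (K - 1) N (sqmod_nonneg _ _)).
  pose proof (psum_delta_le (2 * sqmod weyl_img K + 2 * sqmod weyl (K - 1)%nat) K N
    ltac:(pose proof (sqmod_nonneg weyl_img K); pose proof (sqmod_nonneg weyl (K - 1)%nat); lra)).
  pose proof (psum_tail_le (sqmod weyl_img) (S K) N (sqmod_nonneg weyl_img) weyl_img_l2).
  unfold trunc_err_total. fold (l2sq weyl_img) in H1. lra.
Qed.

Lemma is_lim_seq_trunc_err_total : is_lim_seq (fun k => trunc_err_total (k + p + 2)) 0.
Proof.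
  unfold trunc_err_total.
  replace (Finite 0) with (Finite (0 + (2 * 0 + 2 * 0) + (l2sq weyl_img - l2sq weyl_img))) by (f_equal; ring).
  pose proof (tends0_sqmod weyl weyl_tends0) as H1.
  pose proof (tends0_sqmod weyl_img (tends0_l2 weyl_img weyl_img_l2)) as H2.
  pose proof (is_lim_seq_psum (sqmod weyl_img) weyl_img_l2) as H3.
  apply is_lim_seq_plus'. apply is_lim_seq_plus'.
  - apply (is_lim_seq_incr_n (sqmod weyl) (p + 2)) in H1.
    eapply is_lim_seq_ext; [|exact H1]. intros n; cbv beta; f_equal; lia.
  - apply is_lim_seq_plus'.
    + apply (is_lim_seq_incr_n (sqmod weyl_img) (p + 2)) in H2.
      replace (Finite (2 * 0)) with (Rbar_mult 2 0) by (simpl; f_equal; ring). apply is_lim_seq_scal_l.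
      eapply is_lim_seq_ext; [|exact H2]. intros n; cbv beta; f_equal; lia.
    + apply (is_lim_seq_incr_n (sqmod weyl) (p + 1)) in H1.
      replace (Finite (2 * 0)) with (Rbar_mult 2 0) by (simpl; f_equal; ring). apply is_lim_seq_scal_l.
      eapply is_lim_seq_ext; [|exact H1]. intros n; cbv beta; f_equal; lia.
  - apply is_lim_seq_minus'. apply is_lim_seq_const.
    apply (is_lim_seq_incr_n (psum (sqmod weyl_img)) (p + 3)) in H3.
    eapply is_lim_seq_ext; [|exact H3]. intros n; cbv beta; f_equal; lia.
Qed.

Lemma range_not_closed : ~ closed_range (Lz p z).
Proof.
  intros Hcl.
  assert (Hlim : is_lim_seq (fun k => l2norm (vsub (Lz p z (truncate (k + p + 2) weyl)) weyl_img)) 0).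
  { apply is_lim_seq_le_le with (fun _ => 0) (fun k => sqrt (trunc_err_total (k + p + 2))).
    - intros k. split. apply sqrt_pos. unfold l2norm. apply sqrt_le_1_alt.
      apply l2sq_trunc_diff_le. lia.
    - apply is_lim_seq_const.
    - apply is_lim_seq_sqrt0. intros; apply trunc_err_total_nonneg. apply is_lim_seq_trunc_err_total. }
  destruct (Hcl _ weyl_img (fun k => ex_intro _ _ (conj (truncate_l2 _ _) eq_refl)) weyl_img_l2 Hlim)
    as [x [Hx E]].
  exact (weyl_img_not_in_range x Hx E).
Qed.

Lemma interval_not_invertible : ~ has_bounded_inverse (Lz p z).
Proof.
  intros [B [HB [H1 H2]]]. apply (weyl_img_not_in_range (B weyl_img)). apply HB. apply weyl_img_l2.
  symmetry. apply H2. apply weyl_img_l2.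
Qed.

End Interval.

(** * Uniqueness of kernel dimension and range codimension *)

Definition fsum (c : nat -> C) (W : nat -> nat -> C) (m : nat) : nat -> C :=
  fun x => csum (fun j => Cmult (c j) (W j x)) m.

Definition skip (k i : nat) : nat := if Nat.ltb i k then i else S i.

Lemma csum_skip f m k : (k < m)%nat -> csum f m = Cplus (f k) (csum (fun i => f (skip k i)) (m - 1)).
Proof.
  induction m; intros Hk. lia.
  destruct (Nat.eq_dec k m).
  - subst. simpl csum at 1. replace (S m - 1)%nat with m by lia.
    rewrite (csum_ext (fun i => f (skip m i)) f). ring.
    intros i Hi. unfold skip. destruct (Nat.ltb_spec i m); [auto|lia].
  - simpl csum at 1. rewrite IHm by lia. replace (S m - 1)%nat with (S (m - 1)) by lia.
    rewrite csum_S. replace (skip k (m - 1)) with m. ring.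
    unfold skip. destruct (Nat.ltb_spec (m - 1) k); lia.
Qed.

Lemma finite_choice {T : Type} (m : nat) (P : nat -> T -> Prop) (d : T) :
  (forall i, (i < m)%nat -> exists x, P i x) -> exists f : nat -> T, forall i, (i < m)%nat -> P i (f i).
Proof.
  induction m; intros H.
  - exists (fun _ => d). intros; lia.
  - destruct IHm as [f Hf]. intros; apply H; lia.
    destruct (H m ltac:(lia)) as [x Hx].
    exists (fun i => if Nat.eqb i m then x else f i). intros i Hi.
    destruct (Nat.eqb_spec i m). subst; auto. apply Hf; lia.
Qed.

(* Steinitz exchange modulo a subspace [P]: [m] vectors independent modulo [P], each congruent
   modulo [P] to a combination of [n] vectors, force [m <= n].  With [P = {0}] this bounds kernel
   dimensions, with [P] the range it bounds codimensions. *)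
Section Steinitz.
Variable P : (nat -> C) -> Prop.
Hypothesis HPc : forall a u v, P u -> P v -> P (vadd (vscale a u) v).

Lemma P_ext u v : (forall x, u x = v x) -> P u -> P v.
Proof. intros H Hu. replace v with u; auto. apply functional_extensionality; auto. Qed.

Lemma P_comb a b u v : P u -> P v -> P (fun x => Cplus (Cmult a (u x)) (Cmult b (v x))).
Proof.
  intros Hu Hv. apply P_ext with (vadd (vscale a u) (vadd (vscale (Cminus b (RtoC 1)) v) v)).
  intros x. unfold vadd, vscale. ring. apply HPc; auto.
Qed.

Lemma fsum_S c W m x : fsum c W (S m) x = Cplus (fsum c W m x) (Cmult (c m) (W m x)).
Proof. reflexivity. Qed.

Section Pivot.
Variables (U W : nat -> nat -> C) (a : nat -> nat -> C) (m n k : nat).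
Hypothesis Hk : (k < m)%nat.
Hypothesis Hpiv : a k n <> RtoC 0.

Let t (i : nat) : C := Cdiv (a (skip k i) n) (a k n).
Let W' (i x : nat) : C := Cminus (W (skip k i) x) (Cmult (t i) (W k x)).
Let a' (i j : nat) : C := Cminus (a (skip k i) j) (Cmult (t i) (a k j)).

Lemma skip_lt i : (i < m - 1)%nat -> (skip k i < m)%nat /\ skip k i <> k.
Proof. intros Hi. unfold skip. destruct (Nat.ltb_spec i k); lia. Qed.

Lemma pivot_independent :
  (forall c, P (fsum c W m) -> forall j, (j < m)%nat -> c j = RtoC 0) ->
  forall d, P (fsum d W' (m - 1)) -> forall j, (j < m - 1)%nat -> d j = RtoC 0.
Proof.
  intros Hind d HPd j Hj.
  set (c := fun j => if Nat.eqb j k then Copp (csum (fun i => Cmult (d i) (t i)) (m - 1))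
                     else if Nat.ltb j k then d j else d (j - 1)%nat).
  assert (HPc' : P (fsum c W m)).
  { apply P_ext with (fsum d W' (m - 1)); auto. intros x. unfold fsum.
    rewrite (csum_skip (fun j => Cmult (c j) (W j x)) m k Hk).
    unfold c at 1. rewrite Nat.eqb_refl.
    rewrite (csum_ext (fun i => Cmult (c (skip k i)) (W (skip k i) x)) (fun i => Cmult (d i) (W (skip k i) x))).
    - unfold W'. rewrite (csum_ext (fun j => Cmult (d j) (Cminus (W (skip k j) x) (Cmult (t j) (W k x))))
                          (fun j => Cminus (Cmult (d j) (W (skip k j) x)) (Cmult (W k x) (Cmult (d j) (t j)))))
        by (intros; ring).
      rewrite csum_minus, csum_scal. ring.
    - intros i Hi. f_equal. unfold c, skip. destruct (Nat.ltb_spec i k).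
      + destruct (Nat.eqb_spec i k); [lia|]. destruct (Nat.ltb_spec i k); [auto|lia].
      + destruct (Nat.eqb_spec (S i) k); [lia|]. destruct (Nat.ltb_spec (S i) k); [lia|]. f_equal. lia. }
  pose proof (Hind c HPc' (skip k j) ltac:(apply skip_lt; auto)) as Hc.
  unfold c, skip in Hc. destruct (Nat.ltb_spec j k).
  - destruct (Nat.eqb_spec j k); [lia|]. destruct (Nat.ltb_spec j k); [auto|lia].
  - destruct (Nat.eqb_spec (S j) k); [lia|]. destruct (Nat.ltb_spec (S j) k); [lia|].
    replace (S j - 1)%nat with j in Hc by lia. auto.
Qed.

Lemma pivot_span :
  (forall i, (i < m)%nat -> P (fun x => Cminus (W i x) (fsum (a i) U (S n) x))) ->
  forall i, (i < m - 1)%nat -> P (fun x => Cminus (W' i x) (fsum (a' i) U n x)).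
Proof.
  intros Hspan i Hi. destruct (skip_lt i Hi) as [Hski Hskk].
  pose proof (Hspan (skip k i) Hski) as H1. pose proof (Hspan k Hk) as H2.
  apply P_ext with (fun x => Cplus (Cmult (RtoC 1) (Cminus (W (skip k i) x) (fsum (a (skip k i)) U (S n) x)))
                                   (Cmult (Copp (t i)) (Cminus (W k x) (fsum (a k) U (S n) x)))).
  2: apply P_comb; auto.
  intros x. rewrite !fsum_S. unfold W', a', fsum.
  rewrite (csum_ext (fun j => Cmult (Cminus (a (skip k i) j) (Cmult (t i) (a k j))) (U j x))
                    (fun j => Cminus (Cmult (a (skip k i) j) (U j x)) (Cmult (t i) (Cmult (a k j) (U j x)))))
    by (intros; ring).
  rewrite csum_minus, csum_scal.
  assert (Ht : Cmult (t i) (a k n) = a (skip k i) n) by (unfold t; field; auto).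
  match goal with |- _ = ?V =>
    transitivity (Cminus V (Cmult (Cminus (a (skip k i) n) (Cmult (t i) (a k n))) (U n x))) end.
  ring. rewrite Ht. ring.
Qed.

End Pivot.

Lemma steinitz_fsum : forall n m (U W : nat -> nat -> C) (a : nat -> nat -> C),
  (forall c, P (fsum c W m) -> forall j, (j < m)%nat -> c j = RtoC 0) ->
  (forall i, (i < m)%nat -> P (fun x => Cminus (W i x) (fsum (a i) U n x))) ->
  (m <= n)%nat.
Proof.
  induction n; intros m U W a Hind Hspan.
  - destruct m as [|m]. lia. exfalso.
    set (c := fun j => if Nat.eqb j 0 then RtoC 1 else RtoC 0).
    assert (HPc1 : P (fsum c W (S m))).
    { apply P_ext with (fun x => Cminus (W O x) (fsum (a O) U 0 x)); [|apply Hspan; lia].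
      intros x. unfold fsum, c. simpl csum at 1.
      rewrite (csum_ext _ (fun j => if Nat.eqb j 0 then (fun j => W j x) j else RtoC 0)).
      rewrite (csum_delta (fun j => W j x) 0 (S m)). simpl. ring.
      intros j _. destruct (Nat.eqb j 0); ring. }
    specialize (Hind c HPc1 0%nat ltac:(lia)). unfold c in Hind. simpl in Hind.
    injection Hind. lra.
  - destruct (classic (exists k, (k < m)%nat /\ a k n <> RtoC 0)) as [[k [Hk Hak]]|Hno].
    + cut (m - 1 <= n)%nat. lia.
      exact (IHn _ U _ _ (pivot_independent W a m n k Hk Hind) (pivot_span U W a m n k Hk Hak Hspan)).
    + assert (Hz : forall i, (i < m)%nat -> a i n = RtoC 0).
      { intros i Hi. destruct (Ceq_dec (a i n) (RtoC 0)); auto. exfalso. apply Hno. exists i; auto. }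
      cut (m <= n)%nat. lia.
      apply (IHn m U W a Hind). intros i Hi.
      apply P_ext with (fun x => Cminus (W i x) (fsum (a i) U (S n) x)); [|apply Hspan; auto].
      intros x. rewrite fsum_S, Hz by auto. ring.
Qed.

Lemma lincomb_fsum cs ws : length cs = length ws ->
  forall x, lincomb cs ws x = fsum (fun j => nth j cs (RtoC 0)) (fun j => nth j ws vzero) (length ws) x.
Proof.
  revert cs. induction ws as [|w ws IH]; intros cs Hl x.
  - destruct cs; [|discriminate]. simpl. unfold vzero, fsum. reflexivity.
  - destruct cs as [|c cs]; [discriminate|]. simpl in Hl. injection Hl as Hl.
    simpl lincomb. unfold vadd, vscale. rewrite IH by auto. unfold fsum. simpl length.
    rewrite csum_shift0. simpl. ring.
Qed.

Lemma steinitz (us ws : list (nat -> C)) :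
  (forall cs, length cs = length ws -> P (lincomb cs ws) -> List.Forall (fun c => c = RtoC 0) cs) ->
  (forall w, In w ws -> exists cs, length cs = length us /\ P (vsub w (lincomb cs us))) ->
  (length ws <= length us)%nat.
Proof.
  intros Hind Hspan.
  set (m := length ws). set (n := length us).
  destruct (finite_choice m (fun i cs => length cs = n /\ P (vsub (nth i ws vzero) (lincomb cs us))) nil) as [f Hf].
  { intros i Hi. apply Hspan. apply nth_In. auto. }
  apply (steinitz_fsum n m (fun j => nth j us vzero) (fun j => nth j ws vzero) (fun i j => nth j (f i) (RtoC 0))).
  - intros c Hc j Hj.
    set (cs := map c (seq 0 m)).
    assert (Hl : length cs = m) by (unfold cs; rewrite length_map, length_seq; auto).
    assert (HR : P (lincomb cs ws)).
    { apply P_ext with (fsum c (fun j => nth j ws vzero) m); auto. intros x. rewrite lincomb_fsum by auto.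
      unfold fsum. fold m. apply csum_ext. intros k Hk. unfold cs.
      rewrite nth_indep with (d' := c 0%nat) by (rewrite length_map, length_seq; auto).
      rewrite map_nth, seq_nth by auto. reflexivity. }
    specialize (Hind cs Hl HR). rewrite List.Forall_forall in Hind.
    replace (c j) with (nth j cs (RtoC 0)). apply Hind. apply nth_In. lia.
    unfold cs. rewrite nth_indep with (d' := c 0%nat) by (rewrite length_map, length_seq; auto).
    rewrite map_nth, seq_nth by auto. reflexivity.
  - intros i Hi. destruct (Hf i Hi) as [Hl HR].
    apply P_ext with (vsub (nth i ws vzero) (lincomb (f i) us)); auto.
    intros x. unfold vsub. rewrite lincomb_fsum by auto. reflexivity.
Qed.

End Steinitz.

Section Fredholm.
Variable A : Op.
Hypothesis HAlin : forall a u v, A (vadd (vscale a u) v) = vadd (vscale a (A u)) (A v).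

Lemma in_range_comb : forall a u v, in_range A u -> in_range A v -> in_range A (vadd (vscale a u) v).
Proof.
  intros a u v [x [Hx Ex]] [y [Hy Ey]]. exists (vadd (vscale a x) y). split.
  apply l2_add; auto. apply l2_scale; auto. rewrite HAlin. subst. reflexivity.
Qed.

Lemma vzero_comb : forall a u v, u = vzero -> v = vzero -> vadd (vscale a u) v = vzero.
Proof.
  intros a u v Hu Hv. subst. apply functional_extensionality. intros i. unfold vadd, vscale, vzero. ring.
Qed.

Lemma dim_ker_le m d : dim_ker A m -> dim_ker A d -> (m <= d)%nat.
Proof.
  intros [ws [Hl [HF [Hind _]]]] [es [Hle [_ [_ Hspan]]]].
  rewrite <- Hl, <- Hle. apply (steinitz (fun x => x = vzero) vzero_comb).
  - intros cs Hcs H. apply Hind; auto. rewrite Hl in Hcs. auto.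
  - intros w Hw. rewrite List.Forall_forall in HF. destruct (HF w Hw) as [Hw2 Hw0].
    destruct (Hspan w Hw2 Hw0) as [cs [Hcs E]]. exists cs. split. rewrite Hle; auto.
    rewrite <- E. apply vsub_self.
Qed.

Lemma codim_range_le n d : codim_range A n -> codim_range A d -> (n <= d)%nat.
Proof.
  intros [ws [Hl [HF [Hind _]]]] [es [Hle [_ [_ Hspan]]]].
  rewrite <- Hl, <- Hle. apply (steinitz (in_range A) in_range_comb).
  - intros cs Hcs H. apply Hind; auto. rewrite Hl in Hcs. auto.
  - intros w Hw. rewrite List.Forall_forall in HF. pose proof (HF w Hw) as Hw2.
    destruct (Hspan w Hw2) as [v [cs [Hv [Hcs E]]]]. exists cs. split. rewrite Hle; auto.
    exists v. split; auto. rewrite E. apply functional_extensionality. intros i. unfold vsub, vadd. ring.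
Qed.

Lemma fredholm_index0 d : closed_range A -> dim_ker A d -> codim_range A d ->
  fredholm A /\ forall k, fredholm_index A k -> k = 0%Z.
Proof.
  intros Hcl Hk Hc. split.
  - split; auto. split; eexists; eauto.
  - intros k [_ [m [n [Hm [Hn E]]]]].
    assert (m = d) by (apply Nat.le_antisymm; [apply dim_ker_le|apply dim_ker_le]; auto).
    assert (n = d) by (apply Nat.le_antisymm; [apply codim_range_le|apply codim_range_le]; auto).
    subst. lia.
Qed.

End Fredholm.

Lemma not_essential_of_index0 A z : fredholm (shift_op A z) -> (forall k, fredholm_index (shift_op A z) k -> k = 0%Z) ->
  ~ essential_spectrum A z.
Proof.
  intros Hf Hk [_ [H|[_ [k [Hk' Hne]]]]]. auto. apply Hne. apply Hk; auto.
Qed.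

Lemma nth_map_seq (f : nat -> C) n j d : (j < n)%nat -> nth j (map f (seq 0 n)) d = f j.
Proof.
  intros Hj. rewrite nth_indep with (d' := f 0%nat) by (rewrite length_map, length_seq; auto).
  rewrite map_nth, seq_nth by auto. reflexivity.
Qed.

Lemma lincomb_map_seq (F : nat -> nat -> C) cs s n x : length cs = n ->
  lincomb cs (map F (seq s n)) x = csum (fun j => Cmult (nth j cs (RtoC 0)) (F (s + j)%nat x)) n.
Proof.
  intros Hl. rewrite lincomb_fsum by (rewrite length_map, length_seq; auto).
  rewrite length_map, length_seq. unfold fsum. apply csum_ext. intros j Hj.
  f_equal. rewrite nth_indep with (d' := F s) by (rewrite length_map, length_seq; auto).
  rewrite map_nth, seq_nth by auto. reflexivity.
Qed.

Lemma Forall_nth_zero (cs : list C) : (forall j, (j < length cs)%nat -> nth j cs (RtoC 0) = RtoC 0) ->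
  List.Forall (fun c => c = RtoC 0) cs.
Proof.
  intros H. apply List.Forall_forall. intros c Hc. apply In_nth with (d := RtoC 0) in Hc.
  destruct Hc as [j [Hj E]]. rewrite <- E. apply H; auto.
Qed.

(** * The eigenvalue p is not in the essential spectrum *)

Section AtP.
Variable p : nat.
Hypothesis Hp : (5 <= p)%nat.
Definition z_p : C := RtoC (INR p).

Lemma z_p_not_interval : ~ (Im z_p = 0 /\ 0 <= Re z_p <= 4).
Proof.
  unfold z_p. simpl. intros [_ [_ H]]. assert (INR 5 <= INR p) by (apply le_INR; auto). simpl in H0. lra.
Qed.

Lemma Lz_p_clique v i : (i < p - 1)%nat -> Lz p z_p v i = Copp (csum v p).
Proof.
  intros Hi. rewrite Lz_eq, Lap_clique by lia. destruct (Nat.eqb_spec i (p-1)); [lia|]. unfold z_p. ring.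
Qed.

Definition range_p (w : nat -> C) : Prop := l2 w /\ forall i, (i < p - 1)%nat -> w i = w O.

Lemma in_range_p_iff w : in_range (Lz p z_p) w <-> range_p w.
Proof.
  destruct (path_root_exists z_p) as [r [Hr0 [Hr1 Hz]]].
  pose proof (path_root_lt1 z_p r Hr0 Hr1 Hz z_p_not_interval) as Hr.
  split.
  - intros [v [Hv E]]. subst w. split. apply Lz_l2; auto. lia.
    intros i Hi. rewrite !Lz_p_clique by lia. auto.
  - intros [Hw Hc].
    assert (Hr1n : RtoC 1 <> r) by (intros E; rewrite <- E, Cmod_1 in Hr; lra).
    set (T := Copp (w O)).
    set (al := Cdiv (Cplus (Cminus (w (p - 1)%nat) (w O)) (path_sol r (path_part p w) 1)) (Cminus (RtoC 1) r)).
    set (u := fun _ : nat => Cdiv (Cminus T al) (RtoC (INR (p - 1)))).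
    assert (Hq : RtoC (INR (p - 1)) <> RtoC 0) by (intros E; injection E; intros E'; apply (not_0_INR (p-1)); auto; lia).
    assert (Hcs : Cplus (csum u (p - 1)) al = T).
    { unfold u. rewrite csum_const. field. auto. }
    exists (assemble p r u al w). split. apply assemble_l2; auto.
    apply functional_extensionality. intros i.
    destruct (Nat.lt_ge_cases i (p - 1)).
    + rewrite Lz_assemble_clique by auto. rewrite Hcs. unfold z_p. unfold T. rewrite (Hc i H). ring.
    + destruct (Nat.eq_dec i (p - 1)).
      * subst i. rewrite Lz_assemble_zero by auto. rewrite Hcs. unfold T, al, z_p. rewrite RtoC_plus.
        field. intros E. apply Hr1n. apply Ceq_minus in E. auto.
      * symmetry. apply Lz_assemble_path; auto. lia.
Qed.

Lemma closed_range_p : closed_range (Lz p z_p).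
Proof.
  intros u w Hu Hw Hlim. apply in_range_p_iff. split; auto. intros i Hi.
  apply Ceq_minus. apply Cmod_eq_0. apply Rle_antisym; [|apply Cmod_ge_0].
  apply (le_lim0 _ (fun k => 2 * l2norm (vsub (u k) w))).
  - intros k. destruct (proj1 (in_range_p_iff (u k)) (Hu k)) as [Hl Hc].
    assert (Hd : l2 (vsub (u k) w)) by (apply l2_sub; auto).
    pose proof (Cmod_le_l2norm _ i Hd). pose proof (Cmod_le_l2norm _ O Hd). unfold vsub in *.
    replace (Cminus (w i) (w O)) with (Cminus (Cminus (u k O) (w O)) (Cminus (u k i) (w i))) by (rewrite (Hc i Hi); ring).
    eapply Rle_trans. apply Cmod_minus_le. lra.
  - replace (Finite 0) with (Rbar_mult 2 0) by (simpl; f_equal; ring). apply is_lim_seq_scal_l. auto.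
Qed.

Definition ker_basis_p : list (nat -> C) := map (fun j => vsub (unit_vec j) (unit_vec (p - 2))) (seq 0 (p - 2)).
Definition coker_basis_p : list (nat -> C) := map unit_vec (seq 0 (p - 2)).

Lemma kernel_p_of_support v : (forall i, (p - 1 <= i)%nat -> v i = RtoC 0) -> csum v (p - 1) = RtoC 0 ->
  forall i, Lz p z_p v i = RtoC 0.
Proof.
  intros Hs Hc i.
  assert (Hcp : csum v p = RtoC 0).
  { replace p with (S (p - 1)) by lia. rewrite csum_S, Hc, Hs by lia. ring. }
  rewrite Lz_eq. destruct (Nat.lt_ge_cases i p).
  - rewrite Lap_clique by lia. rewrite Hcp. unfold z_p.
    destruct (Nat.eqb_spec i (p - 1)). rewrite !Hs by lia. ring. ring.
  - rewrite Lap_path by lia. rewrite !Hs by lia. ring.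
Qed.

Lemma lincomb_ker_basis_p cs x : length cs = (p - 2)%nat ->
  lincomb cs ker_basis_p x = Cminus (if Nat.ltb x (p - 2) then nth x cs (RtoC 0) else RtoC 0)
                           (if Nat.eqb x (p - 2) then csum (fun j => nth j cs (RtoC 0)) (p - 2) else RtoC 0).
Proof.
  intros Hl. unfold ker_basis_p. rewrite lincomb_map_seq by auto. simpl.
  unfold vsub. rewrite (csum_ext _ (fun j => Cminus (Cmult (nth j cs (RtoC 0)) (unit_vec j x))
                                        (Cmult (unit_vec (p - 2) x) (nth j cs (RtoC 0))))) by (intros; ring).
  rewrite csum_minus, csum_scal, csum_unit_vec. unfold unit_vec at 1. destruct (Nat.eqb x (p - 2)); ring.
Qed.

Lemma lincomb_coker_basis_p cs x : length cs = (p - 2)%nat ->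
  lincomb cs coker_basis_p x = if Nat.ltb x (p - 2) then nth x cs (RtoC 0) else RtoC 0.
Proof. intros Hl. unfold coker_basis_p. rewrite lincomb_map_seq by auto. simpl. apply csum_unit_vec. Qed.

Lemma ker_basis_p_kernel j : (j < p - 2)%nat ->
  l2 (vsub (unit_vec j) (unit_vec (p - 2))) /\ Lz p z_p (vsub (unit_vec j) (unit_vec (p - 2))) = vzero.
Proof.
  intros Hj. split. apply l2_sub; apply unit_vec_l2.
  apply functional_extensionality. intros i. unfold vzero. apply kernel_p_of_support.
  - intros k Hk. unfold vsub, unit_vec. destruct (Nat.eqb_spec k j); [lia|].
    destruct (Nat.eqb_spec k (p-2)); [lia|]. ring.
  - unfold vsub. rewrite csum_minus.
    rewrite (csum_ext (unit_vec j) (fun k => if Nat.eqb k j then (fun _ => RtoC 1) k else RtoC 0)) by auto.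
    rewrite (csum_ext (unit_vec (p-2)) (fun k => if Nat.eqb k (p-2) then (fun _ => RtoC 1) k else RtoC 0)) by auto.
    rewrite !csum_delta. destruct (Nat.ltb_spec j (p-1)); [|lia]. destruct (Nat.ltb_spec (p-2) (p-1)); [|lia]. ring.
Qed.

Lemma kernel_p_shape v : l2 v -> (forall i, Lz p z_p v i = RtoC 0) ->
  (forall i, (p - 1 <= i)%nat -> v i = RtoC 0) /\ csum v (p - 2) = Copp (v (p - 2)%nat).
Proof.
  intros Hv HA.
  destruct (path_root_exists z_p) as [r [Hr0 [Hr1 Hz]]].
  pose proof (path_root_lt1 z_p r Hr0 Hr1 Hz z_p_not_interval) as Hr.
  destruct (kernel_equations p Hp z_p r Hr0 Hr1 Hz v Hv HA) as [Hk [HT Hi]].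
  assert (HT0 : csum v p = RtoC 0).
  { pose proof (Hi 0%nat ltac:(lia)). unfold z_p in H. rewrite <- H. ring. }
  assert (Hb : v (p - 1)%nat = RtoC 0).
  { rewrite HT0 in HT. unfold zero_coef, z_p in HT. rewrite RtoC_plus in HT.
    replace (Cminus (Cminus (Cplus (RtoC (INR p)) (RtoC 1)) (RtoC (INR p))) r) with (Cminus (RtoC 1) r) in HT by ring.
    symmetry in HT. apply Cmult_eq_0 in HT. destruct HT as [E|E]; auto.
    exfalso. apply Ceq_minus in E. rewrite <- E, Cmod_1 in Hr. lra. }
  split.
  - intros i Hi'. replace i with (p - 1 + (i - (p - 1)))%nat by lia. rewrite Hk, Hb. ring.
  - replace p with (S (S (p - 2))) in HT0 by lia. rewrite !csum_S in HT0.
    replace (S (p - 2)) with (p - 1)%nat in HT0 by lia. rewrite Hb in HT0.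
    apply Ceq_minus. rewrite <- HT0. ring.
Qed.

Lemma dim_ker_p : dim_ker (Lz p z_p) (p - 2).
Proof.
  exists ker_basis_p. split; [unfold ker_basis_p; rewrite length_map, length_seq; auto|].
  split; [|split].
  - apply List.Forall_forall. intros w Hw. unfold ker_basis_p in Hw. apply in_map_iff in Hw.
    destruct Hw as [j [E Hj]]. apply in_seq in Hj. subst w. apply ker_basis_p_kernel. lia.
  - intros cs Hl H0. apply Forall_nth_zero. intros j Hj. rewrite Hl in Hj.
    apply (f_equal (fun f => f j)) in H0. rewrite lincomb_ker_basis_p in H0 by auto.
    destruct (Nat.ltb_spec j (p - 2)); [|lia]. destruct (Nat.eqb_spec j (p-2)); [lia|].
    unfold vzero in H0. transitivity (Cminus (nth j cs (RtoC 0)) (RtoC 0)); [ring|exact H0].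
  - intros v Hv HA.
    destruct (kernel_p_shape v Hv (fun i => f_equal (fun f => f i) HA)) as [Hpath Hsum].
    exists (map v (seq 0 (p - 2))). split. rewrite length_map, length_seq; auto.
    apply functional_extensionality. intros x. rewrite lincomb_ker_basis_p by (rewrite length_map, length_seq; auto).
    pose proof (fun j => nth_map_seq v (p - 2) j (RtoC 0)) as Hn.
    rewrite (csum_ext _ v _ Hn), Hsum.
    destruct (Nat.ltb_spec x (p - 2)); destruct (Nat.eqb_spec x (p - 2)); try lia.
    + rewrite Hn by auto. ring.
    + subst. ring.
    + rewrite Hpath by lia. ring.
Qed.

Lemma codim_range_p : codim_range (Lz p z_p) (p - 2).
Proof.
  exists coker_basis_p. split; [unfold coker_basis_p; rewrite length_map, length_seq; auto|].
  split; [|split].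
  - apply List.Forall_forall. intros w Hw. unfold coker_basis_p in Hw. apply in_map_iff in Hw.
    destruct Hw as [j [E _]]. subst. apply unit_vec_l2.
  - intros cs Hl HR. apply in_range_p_iff in HR. destruct HR as [_ Hc].
    assert (H0 : lincomb cs coker_basis_p O = RtoC 0).
    { rewrite <- (Hc (p - 2)%nat) by lia. rewrite lincomb_coker_basis_p by auto.
      destruct (Nat.ltb_spec (p-2) (p-2)); [lia|auto]. }
    apply Forall_nth_zero. intros j Hj. rewrite Hl in Hj.
    pose proof (Hc j ltac:(lia)). rewrite H0, lincomb_coker_basis_p in H by auto.
    destruct (Nat.ltb_spec j (p - 2)); [auto|lia].
  - intros x Hx.
    set (cs := map (fun j => Cminus (x j) (x (p - 2)%nat)) (seq 0 (p - 2))).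
    assert (Hl : length cs = (p - 2)%nat) by (unfold cs; rewrite length_map, length_seq; auto).
    assert (Hn : forall j, (j < p - 2)%nat -> nth j cs (RtoC 0) = Cminus (x j) (x (p - 2)%nat)).
    { intros j Hj. unfold cs. apply (nth_map_seq (fun j => Cminus (x j) (x (p - 2)%nat))). auto. }
    set (y := vsub x (lincomb cs coker_basis_p)).
    assert (Hy : range_p y).
    { split. apply l2_sub; auto. apply (l2_finite _ (p - 2)). intros i Hi. rewrite lincomb_coker_basis_p by auto.
      destruct (Nat.ltb_spec i (p-2)); [lia|auto].
      assert (Hyi : forall i, (i < p - 1)%nat -> y i = x (p - 2)%nat).
      { intros i Hi. unfold y, vsub. rewrite lincomb_coker_basis_p by auto.
        destruct (Nat.ltb_spec i (p - 2)). rewrite Hn by auto. ring. replace i with (p - 2)%nat by lia. ring. }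
      intros i Hi. rewrite !Hyi by lia. auto. }
    apply in_range_p_iff in Hy. destruct Hy as [v [Hv E]].
    exists v, cs. split; auto. split; auto. rewrite <- E. apply functional_extensionality. intros i.
    unfold y, vsub, vadd. ring.
Qed.

Lemma p_not_essential : ~ essential_spectrum (Lap p) z_p.
Proof.
  destruct (fredholm_index0 (Lz p z_p) (Lz_linear p z_p) (p - 2)
             closed_range_p dim_ker_p codim_range_p) as [H1 H2].
  apply not_essential_of_index0; auto.
Qed.

End AtP.

(** * The eigenvalue lam_star is not in the essential spectrum *)

Section AtLamStar.
Variable p : nat.
Hypothesis Hp : (5 <= p)%nat.

Let z := z_star p.
Let r := r_star p.
Let Hr0 : r <> RtoC 0 := r_star_neq0 p Hp.
Let Hr1 : Cmod r < 1 := r_star_lt1 p Hp.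
Let Hz : Cminus (RtoC 2) z = Cplus r (Cinv r) := r_star_root p Hp.

Lemma one_minus_z_neq0 : Cminus (RtoC 1) z <> RtoC 0.
Proof.
  unfold z, z_star. intros E. rewrite <- RtoC_minus in E. injection E. intros E'.
  pose proof (lam_star_bounds p Hp). pose proof (INR_p_ge5 p Hp). lra.
Qed.

Lemma first_path_entry v : l2 v ->
  v p = Cplus (Cmult r (v (p - 1)%nat)) (path_sol r (path_part p (Lz p z v)) 1).
Proof.
  intros Hv.
  set (y := vsub v (assemble p r (fun _ => RtoC 0) (v (p - 1)%nat) (Lz p z v))).
  assert (Hwl : l2 (Lz p z v)) by (apply Lz_l2; auto; lia).
  assert (Hy : l2 y) by (apply l2_sub; auto; apply assemble_l2; auto; lia).
  assert (HA : forall i, (p <= i)%nat -> Lz p z y i = RtoC 0).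
  { intros i Hi. unfold y. rewrite Lz_sub, Lz_assemble_path by auto. ring. }
  pose proof (path_kernel_geom p ltac:(lia) z r Hr0 Hz y ltac:(lra) (tends0_l2 y Hy) HA 1) as Hk1.
  assert (Hyq : y (p - 1)%nat = RtoC 0).
  { unfold y, vsub.
    replace (assemble p r (fun _ => RtoC 0) (v (p - 1)%nat) (Lz p z v) (p - 1)%nat)
      with (assemble p r (fun _ => RtoC 0) (v (p - 1)%nat) (Lz p z v) (p - 1 + 0)%nat) by (f_equal; lia).
    rewrite assemble_path by lia. simpl path_sol. simpl Cpow. ring. }
  rewrite Hyq, Cmult_0_r in Hk1. unfold y, vsub in Hk1. rewrite assemble_path in Hk1 by lia.
  apply Ceq_minus in Hk1. replace (p - 1 + 1)%nat with p in Hk1 by lia. rewrite Hk1. simpl. ring.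
Qed.

Lemma solv_fun_Lz_star v : l2 v -> solv_fun p z r (Lz p z v) = RtoC 0.
Proof.
  intros Hv. pose proof (secular_star p Hp) as HD. fold z r in HD.
  set (b := v (p - 1)%nat). set (T := csum v p).
  set (Q1 := path_sol r (path_part p (Lz p z v)) 1).
  assert (Eq : Lz p z v (p - 1)%nat = Cminus (Cminus (Cmult (Cminus (RtoC (INR p + 1)) z) b) T) (Cplus Q1 (Cmult b r))).
  { rewrite Lz_eq, Lap_clique by lia. destruct (Nat.eqb_spec (p-1) (p-1)); [|lia].
    rewrite (first_path_entry v Hv). fold b T Q1. rewrite RtoC_plus. simpl. ring. }
  assert (EW : csum (Lz p z v) (p - 1) = Cminus (Cmult (Cminus (RtoC (INR p)) z) (csum v (p - 1))) (Cmult (RtoC (INR (p - 1))) T)).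
  { rewrite (csum_ext _ (fun i => Cminus (Cmult (Cminus (RtoC (INR p)) z) (v i)) T)).
    - rewrite csum_minus, csum_scal, csum_const. reflexivity.
    - intros i Hi. rewrite Lz_eq, Lap_clique by lia. destruct (Nat.eqb_spec i (p-1)); [lia|]. fold T. ring. }
  assert (ET : T = Cplus (csum v (p - 1)) b).
  { unfold T, b. replace p with (S (p - 1)) at 1 by lia. reflexivity. }
  unfold solv_fun, clique_sum, zero_rhs. rewrite EW, Eq. fold Q1.
  replace (csum v (p - 1)) with (Cminus T b) by (rewrite ET; ring).
  rewrite INR_sub1 by lia. rewrite RtoC_minus.
  unfold secular in HD. rewrite RtoC_plus in *.
  transitivity (Cmult b (Cminus (Cmult (Cminus (RtoC 1) z) (Cminus (Cminus (Cplus (RtoC (INR p)) (RtoC 1)) z) r))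
                         (Cminus (RtoC (INR p)) z))).
  ring. rewrite HD. ring.
Qed.

Lemma in_range_of_solv_fun w : l2 w -> solv_fun p z r w = RtoC 0 -> in_range (Lz p z) w.
Proof.
  intros Hw Hc. pose proof (p_minus_z_star_neq0 p Hp) as Hpz. fold z in Hpz.
  pose proof one_minus_z_neq0 as H1.
  set (Q1 := path_sol r (path_part p w) 1).
  set (T := Copp (Cplus (w (p - 1)%nat) Q1)).
  set (u := fun i => Cdiv (Cplus (w i) T) (Cminus (RtoC (INR p)) z)).
  assert (Hcs : csum u (p - 1) = T).
  { unfold u. rewrite (csum_ext _ (fun i => Cmult (Cinv (Cminus (RtoC (INR p)) z)) (Cplus (w i) T))) by (intros; unfold Cdiv; ring).
    rewrite csum_scal, csum_plus, csum_const.
    unfold solv_fun, clique_sum, zero_rhs in Hc. fold Q1 in Hc.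
    assert (EW : csum w (p - 1) = Cmult (Cminus (RtoC 1) z) T).
    { unfold T. apply Ceq_minus. rewrite <- Hc. ring. }
    rewrite EW, INR_sub1 by lia. rewrite RtoC_minus. field. auto. }
  exists (assemble p r u (RtoC 0) w). split. apply assemble_l2; auto.
  apply functional_extensionality. intros i.
  destruct (Nat.lt_ge_cases i (p - 1)).
  - rewrite Lz_assemble_clique by (auto; lia). rewrite Hcs. unfold u. field. auto.
  - destruct (Nat.eq_dec i (p - 1)).
    + subst i. rewrite Lz_assemble_zero by lia. rewrite Hcs. fold Q1. unfold T. ring.
    + symmetry. apply Lz_assemble_path; auto. lia.
Qed.

Lemma in_range_star_iff w : in_range (Lz p z) w <-> (l2 w /\ solv_fun p z r w = RtoC 0).
Proof.
  split.
  - intros [v [Hv E]]. subst w. split. apply Lz_l2; auto; lia. apply solv_fun_Lz_star; auto.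
  - intros [Hw Hc]. apply in_range_of_solv_fun; auto.
Qed.

Lemma closed_range_star : closed_range (Lz p z).
Proof.
  intros u w Hu Hw Hlim. apply in_range_star_iff. split; auto.
  apply Cmod_eq_0. apply Rle_antisym; [|apply Cmod_ge_0].
  apply (le_lim0 _ (fun k => K_solv p z r * l2norm (vsub (u k) w))).
  - intros k. destruct (proj1 (in_range_star_iff (u k)) (Hu k)) as [Hl Hc].
    assert (E : solv_fun p z r w = solv_fun p z r (vadd (vscale (RtoC (-1)) (u k)) w)).
    { rewrite (solv_fun_linear p z r Hr1), Hc by auto. ring. }
    rewrite E. rewrite l2norm_vsub_sym.
    replace (vsub w (u k)) with (vadd (vscale (RtoC (-1)) (u k)) w).
    apply (solv_fun_bound p z r Hr1). apply l2_add; auto. apply l2_scale; auto.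
    apply functional_extensionality. intros i. unfold vsub, vadd, vscale. ring.
  - replace (Finite 0) with (Rbar_mult (K_solv p z r) 0) by (simpl; f_equal; ring). apply is_lim_seq_scal_l. auto.
Qed.

Lemma eig_star_path k : eig_star p (p - 1 + k)%nat = Cpow r k.
Proof. unfold eig_star. rewrite assemble_path by lia. rewrite path_sol_vzero. fold r. ring. Qed.

Lemma eig_star_clique i : (i < p - 1)%nat -> eig_star p i = kappa p.
Proof. intros. unfold eig_star. rewrite assemble_clique; auto. Qed.

Lemma kappa_eq : kappa p = Cinv (Cminus (RtoC 1) z).
Proof.
  pose proof (secular_star p Hp) as HD. pose proof (p_minus_z_star_neq0 p Hp) as Hpz.
  pose proof one_minus_z_neq0. fold z r in HD, Hpz.
  unfold kappa, zero_coef, secular in *. fold z r. rewrite RtoC_plus in *.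
  apply (Cmult_eq_reg_l (Cmult (Cminus (RtoC 1) z) (Cminus (RtoC (INR p)) z))).
  2: { intros E. apply Cmult_eq_0 in E. tauto. }
  transitivity (Cplus (Cminus (Cmult (Cminus (RtoC 1) z) (Cminus (Cminus (Cplus (RtoC (INR p)) (RtoC 1)) z) r))
                              (Cminus (RtoC (INR p)) z)) (Cminus (RtoC (INR p)) z)).
  field. auto. rewrite HD. field. auto.
Qed.

Lemma geom_tail_eig_star :
  geom_tail r (path_part p (eig_star p)) 0 = RtoC (r_minus p * / (1 - r_minus p ^ 2)).
Proof.
  set (rho := r_minus p).
  assert (Hrho : Rabs (rho ^ 2) < 1).
  { pose proof (r_minus_bounds p Hp). pose proof (r_minus_gt_m1 p Hp). rewrite Rabs_pos_eq by nra. unfold rho. nra. }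
  unfold geom_tail. rewrite (CSeries_ext _ (fun m => RtoC (rho * (rho ^ 2) ^ m))).
  - rewrite CSeries_RtoC. rewrite Series_scal_l, Series_geom; auto.
  - intros m. unfold path_part. replace (p + (0 + m))%nat with (p - 1 + S m)%nat by lia.
    rewrite eig_star_path. unfold r, r_star. fold rho. rewrite <- !RtoC_pow, <- RtoC_mult. f_equal.
    rewrite <- pow_mult, <- pow_add. replace (m + S m)%nat with (S (2 * m)) by lia. simpl. ring.
Qed.

Lemma solv_fun_eig_star :
  Cmult (Cminus (RtoC 1) z) (solv_fun p z r (eig_star p)) =
  RtoC (INR (p - 1) + (1 - lam_star p) ^ 2 * (1 + r_minus p ^ 2 / (1 - r_minus p ^ 2))).
Proof.
  pose proof one_minus_z_neq0 as H1.
  unfold solv_fun, clique_sum, zero_rhs.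
  rewrite (csum_ext _ (fun _ => kappa p)) by (intros; apply eig_star_clique; auto).
  rewrite csum_const. replace (eig_star p (p - 1)%nat) with (eig_star p (p - 1 + 0)%nat) by (f_equal; lia).
  rewrite eig_star_path. simpl path_sol. rewrite geom_tail_eig_star, kappa_eq.
  transitivity (Cplus (RtoC (INR (p - 1))) (Cmult (Cmult (Cminus (RtoC 1) z) (Cminus (RtoC 1) z))
                  (Cplus (RtoC 1) (Cmult r (RtoC (r_minus p * / (1 - r_minus p ^ 2))))))).
  - simpl Cpow. field. auto.
  - unfold z, z_star, r, r_star, Rdiv. apply C_eq_proj; simpl; ring.
Qed.

(* The eigenvector is not in the range (there is no Jordan chain at [lam_star]), so it spans a
   complement of the range. *)
Lemma solv_fun_eig_star_neq0 : solv_fun p z r (eig_star p) <> RtoC 0.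
Proof.
  intros Hc. pose proof solv_fun_eig_star as E. rewrite Hc, Cmult_0_r in E. injection E. intros E'.
  pose proof (r_minus_bounds p Hp). pose proof (r_minus_gt_m1 p Hp).
  pose proof (lam_star_bounds p Hp). pose proof (INR_p_ge5 p Hp). pose proof (pos_INR (p - 1)).
  assert (Hq : 0 <= r_minus p ^ 2 / (1 - r_minus p ^ 2)).
  { apply Rmult_le_pos. apply pow2_ge_0. apply Rlt_le, Rinv_0_lt_compat. nra. }
  assert (0 < (1 - lam_star p) ^ 2) by nra.
  assert (0 <= (1 - lam_star p) ^ 2 * (r_minus p ^ 2 / (1 - r_minus p ^ 2))) by (apply Rmult_le_pos; lra).
  assert (E'' : 0 = INR (p - 1) + (1 - lam_star p) ^ 2
                    + (1 - lam_star p) ^ 2 * (r_minus p ^ 2 / (1 - r_minus p ^ 2))).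
  { rewrite E'. simpl. ring. }
  lra.
Qed.

Lemma dim_ker_star : dim_ker (Lz p z) 1.
Proof.
  exists (eig_star p :: nil). split; auto. split; [|split].
  - constructor; [|constructor]. split. apply eig_star_l2; auto.
    apply functional_extensionality. intros i. apply eig_star_eigen; auto.
  - intros cs Hl H0. destruct cs as [|c [|]]; try discriminate.
    constructor; [|constructor]. apply (f_equal (fun f => f (p - 1)%nat)) in H0.
    simpl in H0. unfold vadd, vscale, vzero in H0. rewrite eig_star_zero in H0 by auto.
    rewrite <- H0. ring.
  - intros v Hv HA.
    assert (HA' : forall i, Lz p z v i = RtoC 0) by (intros; rewrite HA; auto).
    destruct (kernel_equations p Hp z r Hr0 ltac:(lra) Hz v Hv HA') as [Hk [HT Hi]].
    exists (v (p - 1)%nat :: nil). split; auto.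
    apply functional_extensionality. intros i. simpl. unfold vadd, vscale, vzero.
    destruct (Nat.lt_ge_cases i (p - 1)).
    + rewrite eig_star_clique by auto. pose proof (Hi i H) as Hvi. rewrite HT in Hvi.
      unfold kappa. fold z r. apply (Cmult_eq_reg_l (Cminus (RtoC (INR p)) z)). 2: apply p_minus_z_star_neq0; auto.
      rewrite Hvi. field. apply p_minus_z_star_neq0; auto.
    + replace i with (p - 1 + (i - (p - 1)))%nat by lia. rewrite Hk, eig_star_path. ring.
Qed.

Lemma codim_range_star : codim_range (Lz p z) 1.
Proof.
  pose proof solv_fun_eig_star_neq0 as Hn.
  exists (eig_star p :: nil). split; auto. split; [|split].
  - constructor; [|constructor]. apply eig_star_l2; auto.
  - intros cs Hl HR. destruct cs as [|c [|]]; try discriminate.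
    apply in_range_star_iff in HR. destruct HR as [_ Hc]. simpl in Hc.
    replace (vadd (vscale c (eig_star p)) vzero) with (vadd (vscale c (eig_star p)) vzero) in Hc by reflexivity.
    rewrite (solv_fun_linear p z r Hr1) in Hc by (apply eig_star_l2 || apply l2_vzero; auto).
    assert (solv_fun p z r vzero = RtoC 0).
    { unfold solv_fun, clique_sum, zero_rhs. rewrite (csum_ext _ (fun _ => RtoC 0)) by auto.
      rewrite csum_zero, path_sol_vzero. unfold vzero. ring. }
    rewrite H, Cplus_0_r in Hc. constructor; [|constructor].
    apply Cmult_eq_0 in Hc. destruct Hc; auto. contradiction.
  - intros x Hx.
    set (t := Cdiv (solv_fun p z r x) (solv_fun p z r (eig_star p))).
    set (y := vadd (vscale (RtoC (-1) * t)%C (eig_star p)) x).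
    assert (Hy : l2 y /\ solv_fun p z r y = RtoC 0).
    { split. apply l2_add; auto. apply l2_scale; apply eig_star_l2; auto.
      unfold y. rewrite (solv_fun_linear p z r Hr1) by (auto; apply eig_star_l2; auto). unfold t. field. auto. }
    apply in_range_star_iff in Hy. destruct Hy as [v [Hv E]].
    exists v, (t :: nil). split; auto. split; auto. rewrite <- E. apply functional_extensionality. intros i.
    unfold y. simpl. unfold vadd, vscale, vzero. ring.
Qed.

Lemma star_not_essential : ~ essential_spectrum (Lap p) z.
Proof.
  destruct (fredholm_index0 (Lz p z) (Lz_linear p z) 1 closed_range_star dim_ker_star codim_range_star) as [H1 H2].
  apply not_essential_of_index0; auto.
Qed.

End AtLamStar.

Lemma spectrum_char p (Hp : (5 <= p)%nat) (z : C) :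
  spectrum (Lap p) z <-> ((Im z = 0 /\ 0 <= Re z <= 4) \/ z = RtoC (lam_star p) \/ z = RtoC (INR p)).
Proof.
  split.
  - intros Hs. destruct (classic (Im z = 0 /\ 0 <= Re z <= 4)) as [Hi|Hi]; [left; auto|right].
    destruct (Ceq_dec z (RtoC (lam_star p))) as [E|E]; [left; auto|right].
    destruct (Ceq_dec z (RtoC (INR p))) as [E'|E']; [auto|exfalso].
    destruct (path_root_exists z) as [r [Hr0 [Hr1 Hz]]].
    pose proof (path_root_lt1 z r Hr0 Hr1 Hz Hi) as Hr.
    apply Hs. apply (resolvent_exists p Hp z r Hr0 Hr Hz E').
    intros HD. apply E. apply (secular_eq0_inv p Hp z r Hr0 Hr Hz HD).
  - intros [[Hi1 Hi2]|[E|E]].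
    + destruct (interval_unit_path_root z Hi1 Hi2) as [r [Hr0 [Hr1 Hz]]].
      apply (interval_not_invertible p Hp z r Hr0 Hr1 Hz).
    + subst z. apply (eigen_not_invertible p _ (eig_star p) (eig_star_l2 p Hp) (eig_star_neq0 p Hp) (eig_star_eigen p Hp)).
    + subst z. apply (eigen_not_invertible p _ eig_p eig_p_l2 eig_p_neq0 (eig_p_eigen p Hp)).
Qed.

Lemma essential_spectrum_char p (Hp : (5 <= p)%nat) (z : C) :
  essential_spectrum (Lap p) z <-> (Im z = 0 /\ 0 <= Re z <= 4).
Proof.
  split.
  - intros Hes. destruct (proj1 (spectrum_char p Hp z) (proj1 Hes)) as [Hi|[E|E]]; auto; exfalso; subst z.
    + exact (star_not_essential p Hp Hes).
    + exact (p_not_essential p Hp Hes).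
  - intros [Hi1 Hi2]. split. apply spectrum_char; auto.
    left. intros [Hcl _].
    destruct (interval_unit_path_root z Hi1 Hi2) as [r [Hr0 [Hr1 Hz]]].
    exact (range_not_closed p Hp z r Hr0 Hr1 Hz Hcl).
Qed.

Theorem proposition6 (p : nat) (hp : (5 <= p)%nat) :
  bounded_op (Lap p) /\
  exists lamstar : R, INR p < lamstar < INR p + 2 /\
    (forall z : C, spectrum (Lap p) z <->
       ((Im z = 0 /\ 0 <= Re z <= 4) \/ z = RtoC lamstar \/ z = RtoC (INR p))) /\
    (forall z : C, essential_spectrum (Lap p) z <-> (Im z = 0 /\ 0 <= Re z <= 4)) /\
    (forall z : C, point_spectrum (Lap p) z <-> (z = RtoC lamstar \/ z = RtoC (INR p))).
Proof.
  split; [apply Lap_bounded; lia|].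
  exists (lam_star p). split; [|split; [|split]].
  - apply lam_star_bounds; auto.
  - intros z. apply spectrum_char; auto.
  - intros z. apply essential_spectrum_char; auto.
  - intros z. apply point_spectrum_char; auto.
Qed.
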